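(* Let $d\ge3$ and let $C,C_1,C_2,\dots\in\mathcal{C}^d_{ar}$ have generators $\psi,\psi_1,\psi_2,\dots$. If $(C_n)$ converges pointwise to $C$, then for every $m\in\{0,1,\dots,d-2\}$ we have $\lim_n\psi_n^{(m)}(z)=\psi^{(m)}(z)$ for every $z\in(0,\infty)$, and $\lim_n D^-\psi_n^{(d-2)}(z)=D^-\psi^{(d-2)}(z)$ for every $z\in\mathrm{Cont}(D^-\psi^{(d-2)})$; moreover in both situations the convergence is continuous, in particular for every sequence $(z_n)$ in $(0,\infty)$ converging to $z\in\mathrm{Cont}(D^-\psi^{(d-2)})$ we have $\lim_n D^-\psi_n^{(d-2)}(z_n)=D^-\psi^{(d-2)}(z)$. Conversely, if $(\psi_n^{(m)})$ converges pointwise to $\psi^{(m)}$ on $(0,\infty)$ for some $m\in\{1,\dots,d-2\}$, then $(C_n)$ converges pointwise to $C$; the same conclusion holds if $\lim_n D^-\psi_n^{(d-2)}(z)=D^-\psi^{(d-2)}(z)$ for every $z\in\mathrm{Cont}(D^-\psi^{(d-2)})$.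
   Context: An Archimedean generator is a continuous non-increasing $\psi:[0,\infty)\to[0,1]$ with $\psi(0)=1$, $\lim_{z\to\infty}\psi(z)=0$, strictly decreasing on $[0,\inf\{z:\psi(z)=0\}]$; pseudo-inverse $\varphi(y)=\inf\{z\in[0,\infty]:\psi(z)=y\}$. $\psi$ is $d$-monotone if $(-1)^{d-2}\psi^{(d-2)}$ exists on $(0,\infty)$ and is non-negative, non-increasing and convex there. $\mathcal{C}^d_{ar}$ is the class of copulas $C(\mathbf{u})=\psi(\varphi(u_1)+\dots+\varphi(u_d))$ with $d$-monotone generator normalized by $\psi(1)=1/2$. $D^-$ denotes the left-hand derivative and $\mathrm{Cont}(g)$ the set of continuity points of $g$. A sequence $(f_n)$ converges continuously to $f$ on a set $S$ if $f_n(z_n)\to f(z)$ for every sequence $z_n\to z\in S$. *)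

From Stdlib Require Import Reals.
From Coquelicot Require Import Coquelicot.
Open Scope R_scope.

(* Archimedean generator psi : [0,oo) -> [0,1] (values on negative reals are irrelevant). *)
Definition is_generator (psi : R -> R) : Prop :=
  (forall x, 0 <= x ->
     filterlim psi (within (fun y => 0 <= y) (locally x)) (locally (psi x))) /\
  (forall x, 0 <= x -> 0 <= psi x <= 1) /\
  (forall x y, 0 <= x -> x <= y -> psi y <= psi x) /\
  psi 0 = 1 /\
  is_lim psi p_infty 0 /\
  (* strictly decreasing on [0, inf {z : psi z = 0}] (the interval is [0,oo) if the set is empty) *)
  (forall x y,
     0 <= x -> x < y ->
     (forall w, 0 <= w -> psi w = 0 -> y <= w) ->
     psi y < psi x).

(* pseudo-inverse phi(y) = inf { z in [0,oo] : psi z = y }, with psi(oo) = 0;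
   Glb_Rbar of the empty set is p_infty. *)
Definition pinv (psi : R -> R) (y : R) : Rbar :=
  Glb_Rbar (fun z => 0 <= z /\ psi z = y).

Definition psi_bar (psi : R -> R) (x : Rbar) : R :=
  match x with Finite r => psi r | _ => 0 end.

Fixpoint Rbar_sum (f : nat -> Rbar) (d : nat) : Rbar :=
  match d with
  | O => Finite 0
  | S k => Rbar_plus (Rbar_sum f k) (f k)
  end.

Definition arch_copula (d : nat) (psi : R -> R) (u : nat -> R) : R :=
  psi_bar psi (Rbar_sum (fun i => pinv psi (u i)) d).

Definition in_unit_cube (d : nat) (u : nat -> R) : Prop :=
  forall i, (i < d)%nat -> 0 <= u i <= 1.

Definition d_monotone (d : nat) (psi : R -> R) : Prop :=
  is_generator psi /\
  (forall k x, (k < d - 2)%nat -> 0 < x -> ex_derive (Derive_n psi k) x) /\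
  let g := fun x => (-1) ^ (d - 2) * Derive_n psi (d - 2) x in
  (forall x, 0 < x -> 0 <= g x) /\
  (forall x y, 0 < x -> x <= y -> g y <= g x) /\
  (forall x y t, 0 < x -> 0 < y -> 0 <= t <= 1 ->
     g (t * x + (1 - t) * y) <= t * g x + (1 - t) * g y).

Definition ar_generator (d : nat) (psi : R -> R) : Prop :=
  d_monotone d psi /\ psi 1 = / 2.

Definition left_deriv (g : R -> R) (z : R) : R :=
  lim (filtermap (fun x => (g x - g z) / (x - z)) (at_left z)).

Definition cont_conv_at (fs : nat -> R -> R) (f : R -> R) (z : R) : Prop :=
  forall zs : nat -> R, (forall n, 0 < zs n) -> is_lim_seq zs z ->
    is_lim_seq (fun n => fs n (zs n)) (f z).

(* Restricting C_n to the points (x, y, 1, ..., 1) yields the bivariate copulas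
   psi_n (phi_n x + phi_n y).  Their convergence carries the convergence of psi_n from
   the normalisation point psi_n 1 = 1/2 to all dyadic points (by halving and adding
   arguments), and then, by monotonicity and continuity of psi, to all z > 0, even
   continuously.  Convergence climbs the derivatives because every signed derivative
   (-1)^j psi^(j), j <= d-2, is nonnegative and nonincreasing: the difference quotients
   of the j-th one bracket the (j+1)-th one, and at order d-2 the left derivative of
   the convex function (-1)^(d-2) psi^(d-2) takes that role at its continuity points.
   Conversely, convergence of such a monotone derivative on a dense set gives, through
   Riemann sums, convergence of the increments of its antiderivative; increments
   together with the anchor psi_n 1 = 1/2, or with a decay bound at infinity that is
   uniform over d-monotone generators, give pointwise convergence one order lower,
   down to psi itself, and then convergence of the inverses phi_n and of C_n. *)

From Stdlib Require Import Reals Lra Lia ZArith Classical IndefiniteDescription.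
From Coquelicot Require Import Coquelicot.
Open Scope R_scope.

(** * Sequences *)

Lemma is_lim_seq_epsilon (u : nat -> R) (l : R) :
  (forall eps, 0 < eps -> eventually (fun n => Rabs (u n - l) < eps)) -> is_lim_seq u l.
Proof. intros H. apply is_lim_seq_spec. intros [eps Heps]. exact (H eps Heps). Qed.

Lemma is_lim_seq_near (u : nat -> R) (l eps : R) :
  is_lim_seq u l -> 0 < eps -> eventually (fun n => Rabs (u n - l) < eps).
Proof. intros H Heps. apply is_lim_seq_spec in H. exact (H (mkposreal eps Heps)). Qed.

Lemma is_lim_seq_eventually_lt (u : nat -> R) (l c : R) :
  is_lim_seq u l -> l < c -> eventually (fun n => u n < c).
Proof.
  intros H Hc. apply (filter_imp (fun n => Rabs (u n - l) < c - l)).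
  - intros n Hn. apply Rabs_lt_between in Hn. lra.
  - apply is_lim_seq_near; [exact H | lra].
Qed.

Lemma is_lim_seq_eventually_gt (u : nat -> R) (l c : R) :
  is_lim_seq u l -> c < l -> eventually (fun n => c < u n).
Proof.
  intros H Hc. apply (filter_imp (fun n => Rabs (u n - l) < l - c)).
  - intros n Hn. apply Rabs_lt_between in Hn. lra.
  - apply is_lim_seq_near; [exact H | lra].
Qed.

Definition limsup_at_most (u : nat -> R) (l : R) : Prop :=
  forall eps, 0 < eps -> exists (v : nat -> R) (lv : R),
    is_lim_seq v lv /\ lv < l + eps /\ eventually (fun n => u n <= v n).

Definition liminf_at_least (u : nat -> R) (l : R) : Prop :=
  forall eps, 0 < eps -> exists (v : nat -> R) (lv : R),
    is_lim_seq v lv /\ l - eps < lv /\ eventually (fun n => v n <= u n).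

Lemma is_lim_seq_sandwich (u : nat -> R) (l : R) :
  limsup_at_most u l -> liminf_at_least u l -> is_lim_seq u l.
Proof.
  intros Hup Hlo. apply is_lim_seq_epsilon. intros eps Heps.
  destruct (Hup eps Heps) as (v & lv & Hv & Hlv & Huv).
  destruct (Hlo eps Heps) as (w & lw & Hw & Hlw & Hwu).
  apply (filter_imp (fun n => (u n <= v n /\ v n < l + eps) /\ (w n <= u n /\ l - eps < w n))).
  - intros n [[A B] [C D]]. apply Rabs_lt_between. lra.
  - apply filter_and; apply filter_and; try assumption.
    + exact (is_lim_seq_eventually_lt v lv _ Hv Hlv).
    + exact (is_lim_seq_eventually_gt w lw _ Hw Hlw).
Qed.

Lemma continuous_eps (f : R -> R) (z eps : R) :
  continuous f z -> 0 < eps ->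
  exists del, 0 < del /\ forall y, Rabs (y - z) < del -> Rabs (f y - f z) < eps.
Proof.
  intros Hc Heps. destruct (proj1 (filterlim_locally f (f z)) Hc (mkposreal eps Heps))
    as [del Hdel].
  exists del. split; [apply cond_pos | intros y Hy; exact (Hdel y Hy)].
Qed.

Lemma pow2_unbounded (r : R) : exists m, r < 2 ^ m.
Proof.
  destruct (archimed r) as [Hup _].
  assert (Hlin : forall m, INR m < 2 ^ m).
  { induction m as [|m IH]; [simpl; lra|].
    rewrite S_INR. simpl. pose proof (pow_R1_Rle 2 m ltac:(lra)). lra. }
  destruct (Rle_lt_dec r 0) as [Hr|Hr]; [exists 0%nat; simpl; lra|].
  assert (Hz : (0 <= up r)%Z) by (apply le_IZR; lra).
  exists (Z.to_nat (up r)). specialize (Hlin (Z.to_nat (up r))).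
  rewrite INR_IZR_INZ, Z2Nat.id in Hlin by exact Hz. lra.
Qed.

Lemma dyadic_dense (a b : R) : 0 <= a -> a < b ->
  exists j m, (1 <= j)%nat /\ a < INR j / 2 ^ m < b.
Proof.
  intros Ha Hab. destruct (pow2_unbounded (/ (b - a))) as [m Hm].
  assert (Hp : 0 < 2 ^ m) by (apply pow_lt; lra).
  set (h := / 2 ^ m).
  assert (Hh : 0 < h < b - a).
  { unfold h. split; [apply Rinv_0_lt_compat; lra|].
    rewrite <- (Rinv_inv (b - a)). apply Rinv_lt_contravar; [|exact Hm].
    apply Rmult_lt_0_compat; [apply Rinv_0_lt_compat|]; lra. }
  destruct (archimed (a / h)) as [Hj1 Hj2].
  assert (Hah : 0 <= a / h) by (apply Rmult_le_pos; [lra | left; apply Rinv_0_lt_compat; lra]).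
  assert (Hz : (0 < up (a / h))%Z) by (apply lt_IZR; lra).
  exists (Z.to_nat (up (a / h))), m.
  assert (Hj : INR (Z.to_nat (up (a / h))) = IZR (up (a / h)))
    by (rewrite INR_IZR_INZ, Z2Nat.id by lia; reflexivity).
  replace (INR (Z.to_nat (up (a / h))) / 2 ^ m) with (IZR (up (a / h)) * h)
    by (rewrite Hj; unfold h; field; lra).
  split.
  - lia.
  - split.
    + apply (Rmult_lt_compat_r h) in Hj1; [|lra].
      replace (a / h * h) with a in Hj1 by (field; lra). exact Hj1.
    + apply (Rmult_le_compat_r h) in Hj2; [|lra].
      replace ((IZR (up (a / h)) - a / h) * h) with (IZR (up (a / h)) * h - a) in Hj2
        by (field; lra). lra.
Qed.

(** * Generators and their inverses *)

(* [pinv psi x] is finite for [x] in (0,1] (see [pinv_spec]); elsewhere [phi] is junk. *)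
Definition phi (psi : R -> R) (x : R) : R := real (pinv psi x).

Section Generator.
Variable psi : R -> R.
Hypothesis G : is_generator psi.

Lemma generator_range x : 0 <= x -> 0 <= psi x <= 1.
Proof. destruct G as (_ & H & _). exact (H x). Qed.

Lemma generator_antitone x y : 0 <= x -> x <= y -> psi y <= psi x.
Proof. destruct G as (_ & _ & H & _). exact (H x y). Qed.

Lemma generator_at_0 : psi 0 = 1.
Proof. destruct G as (_ & _ & _ & H & _). exact H. Qed.

Lemma generator_strict x y : 0 <= x -> x < y -> 0 < psi x -> psi y < psi x.
Proof.
  intros Hx Hxy Hpx. destruct G as (_ & _ & _ & _ & _ & Hs).
  destruct (classic (forall w, 0 <= w -> psi w = 0 -> y <= w)) as [Hy|Hy].
  - exact (Hs x y Hx Hxy Hy).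
  - apply not_all_ex_not in Hy as [w Hw].
    apply imply_to_and in Hw as [Hw0 Hw]. apply imply_to_and in Hw as [Hpw Hwy].
    pose proof (generator_antitone w y Hw0 ltac:(lra)). lra.
Qed.

Lemma generator_vanishes eps : 0 < eps -> exists M, 0 < M /\ psi M < eps.
Proof.
  intros Heps. destruct G as (_ & _ & _ & _ & Hl & _).
  apply is_lim_spec in Hl. destruct (Hl (mkposreal eps Heps)) as [M HM].
  exists (Rmax 1 (M + 1)). pose proof (Rmax_l 1 (M + 1)). pose proof (Rmax_r 1 (M + 1)).
  split; [lra|]. specialize (HM (Rmax 1 (M + 1)) ltac:(simpl; lra)).
  rewrite Rminus_0_r in HM. apply Rabs_lt_between in HM. simpl in HM. lra.
Qed.

Lemma generator_continuous_within x eps : 0 <= x -> 0 < eps ->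
  exists del, 0 < del /\
    forall y, 0 <= y -> Rabs (y - x) < del -> Rabs (psi y - psi x) < eps.
Proof.
  intros Hx Heps. destruct G as [Hc _].
  destruct (proj1 (filterlim_locally _ _) (Hc x Hx) (mkposreal eps Heps)) as [del Hdel].
  exists del. split; [apply cond_pos | intros y Hy Hxy; exact (Hdel y Hxy Hy)].
Qed.

Lemma generator_continuous x : 0 < x -> continuous psi x.
Proof.
  intros Hx. apply filterlim_locally. intros eps.
  destruct (generator_continuous_within x eps ltac:(lra) (cond_pos eps)) as [del [Hdel Hnear]].
  assert (Hr : 0 < Rmin del x) by (apply Rmin_pos; lra).
  exists (mkposreal _ Hr). intros y Hy. change (Rabs (y - x) < Rmin del x) in Hy.
  pose proof (Rmin_l del x). pose proof (Rmin_r del x). apply Rabs_lt_between in Hy as Hy'.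
  apply Hnear; lra.
Qed.

Lemma generator_surjective x : 0 < x <= 1 -> exists z, 0 <= z /\ psi z = x.
Proof.
  intros Hx. destruct (Req_dec x 1) as [->|Hx1].
  { exists 0. split; [lra | exact generator_at_0]. }
  destruct (generator_continuous_within 0 (1 - x)) as [del [Hdel Hnear]]; try lra.
  set (a := del / 2).
  assert (Ha : x < psi a).
  { assert (Hpa : Rabs (psi a - psi 0) < 1 - x)
      by (apply Hnear; unfold a; [lra | rewrite Rminus_0_r, Rabs_right; lra]).
    rewrite generator_at_0 in Hpa. apply Rabs_lt_between in Hpa. lra. }
  destruct (generator_vanishes x) as [M [HM HMx]]; [lra|].
  assert (HaM : a < M).
  { destruct (Rlt_le_dec a M) as [|HMa]; [assumption|].
    pose proof (generator_antitone M a ltac:(lra) HMa). lra. }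
  destruct (Ranalysis5.IVT_interv (fun y => x - psi y) a M) as [z [Hz Hpz]]; try lra.
  { intros y Hy. apply continuity_pt_minus.
    - apply continuity_pt_const. intros ? ?. reflexivity.
    - apply continuity_pt_filterlim, generator_continuous. unfold a in *. lra. }
  exists z. split; [unfold a in *; lra | lra].
Qed.

Lemma pinv_spec x : 0 < x <= 1 ->
  pinv psi x = Finite (phi psi x) /\ 0 <= phi psi x /\ psi (phi psi x) = x.
Proof.
  intros Hx. destruct (generator_surjective x Hx) as [z [Hz Hpz]].
  assert (Huniq : forall w, 0 <= w -> psi w = x -> w = z).
  { intros w Hw Hpw. destruct (Rtotal_order w z) as [H|[H|H]]; auto.
    - pose proof (generator_strict w z Hw H). lra.
    - pose proof (generator_strict z w Hz H). lra. }
  assert (Hp : pinv psi x = Finite z).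
  { apply is_glb_Rbar_unique. split.
    - intros w [Hw Hpw]. rewrite (Huniq w Hw Hpw). simpl. lra.
    - intros b Hb. apply Hb. split; assumption. }
  unfold phi. rewrite Hp. simpl. auto.
Qed.

Lemma phi_unique x z : 0 < x <= 1 -> 0 <= z -> psi z = x -> phi psi x = z.
Proof.
  intros Hx Hz Hpz. destruct (pinv_spec x Hx) as (_ & H1 & H2).
  destruct (Rtotal_order (phi psi x) z) as [H|[H|H]]; auto.
  - pose proof (generator_strict _ _ H1 H). lra.
  - pose proof (generator_strict _ _ Hz H). lra.
Qed.

Lemma phi_1 : phi psi 1 = 0.
Proof. apply phi_unique; [lra | lra | exact generator_at_0]. Qed.

Lemma phi_ge x a : 0 < x <= 1 -> 0 <= a -> x <= psi a -> a <= phi psi x.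
Proof.
  intros Hx Ha H. destruct (pinv_spec x Hx) as (_ & H1 & H2).
  destruct (Rle_lt_dec a (phi psi x)) as [|Hlt]; [assumption|].
  pose proof (generator_strict _ _ H1 Hlt). lra.
Qed.

Lemma phi_le x a : 0 < x <= 1 -> 0 <= a -> psi a <= x -> phi psi x <= a.
Proof.
  intros Hx Ha H. destruct (pinv_spec x Hx) as (_ & H1 & H2).
  destruct (Rle_lt_dec (phi psi x) a) as [|Hlt]; [assumption|].
  pose proof (generator_antitone _ _ Ha (Rlt_le _ _ Hlt)).
  pose proof (generator_strict _ _ Ha Hlt). lra.
Qed.

Lemma psi_at_pinv_0 r : pinv psi 0 = Finite r -> psi r = 0.
Proof.
  intros Er. destruct (Glb_Rbar_correct (fun z => 0 <= z /\ psi z = 0)) as [Hlb Hglb].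
  change (Glb_Rbar _) with (pinv psi 0) in Hlb, Hglb. rewrite Er in Hlb, Hglb.
  assert (Hr : 0 <= r) by (apply (Hglb (Finite 0)); intros w [Hw _]; exact Hw).
  apply Rle_antisym; [|apply generator_range; exact Hr].
  apply Rnot_lt_le. intros Hpos.
  destruct (generator_continuous_within r (psi r) Hr Hpos) as [del [Hdel Hnear]].
  assert (Hw : exists w, (0 <= w /\ psi w = 0) /\ w < r + del).
  { apply NNPP. intros Hn.
    assert (Hle : Rbar_le (r + del) r).
    { apply Hglb. intros w Hw. simpl. apply Rnot_lt_le. intros Hlt. apply Hn. exists w. auto. }
    simpl in Hle. lra. }
  destruct Hw as [w [[Hw0 Hpw] Hwr]].
  assert (Hrw : r <= w) by exact (Hlb w (conj Hw0 Hpw)).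
  specialize (Hnear w Hw0 ltac:(rewrite Rabs_right; lra)).
  rewrite Hpw, Rminus_0_l, Rabs_Ropp, Rabs_right in Hnear; lra.
Qed.

End Generator.

Lemma pinv_nonneg (psi : R -> R) x : Rbar_le 0 (pinv psi x).
Proof.
  destruct (Glb_Rbar_correct (fun z => 0 <= z /\ psi z = x)) as [_ H].
  apply H. intros w [Hw _]. exact Hw.
Qed.

Fixpoint sum_below (f : nat -> R) (n : nat) : R :=
  match n with O => 0 | S k => sum_below f k + f k end.

Lemma Rbar_sum_finite (f : nat -> Rbar) (r : nat -> R) d :
  (forall i, (i < d)%nat -> f i = Finite (r i)) -> Rbar_sum f d = Finite (sum_below r d).
Proof.
  induction d as [|d IH]; intros H; simpl; [reflexivity|].
  rewrite IH by (intros; apply H; lia). rewrite H by lia. reflexivity.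
Qed.

Lemma Rbar_sum_ge (f : nat -> Rbar) d : (forall i, (i < d)%nat -> Rbar_le 0 (f i)) ->
  Rbar_le 0 (Rbar_sum f d) /\ forall i, (i < d)%nat -> Rbar_le (f i) (Rbar_sum f d).
Proof.
  induction d as [|d IH]; intros H; [split; [simpl; lra | intros; lia]|].
  destruct IH as [H1 H2]; [intros; apply H; lia|].
  assert (Hd : Rbar_le 0 (f d)) by (apply H; lia).
  simpl. split.
  - destruct (Rbar_sum f d), (f d); simpl in *; lra || tauto.
  - intros i Hi. destruct (Nat.eq_dec i d) as [->|Hne].
    + destruct (Rbar_sum f d), (f d); simpl in *; lra || tauto.
    + specialize (H2 i ltac:(lia)).
      destruct (f i), (Rbar_sum f d), (f d); simpl in *; lra || tauto.
Qed.

Lemma sum_below_nonneg (f : nat -> R) d :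
  (forall i, (i < d)%nat -> 0 <= f i) -> 0 <= sum_below f d.
Proof.
  induction d as [|d IH]; intros H; simpl; [lra|].
  pose proof (IH ltac:(intros; apply H; lia)). pose proof (H d ltac:(lia)). lra.
Qed.

Lemma sum_below_lim (a : nat -> nat -> R) (b : nat -> R) d :
  (forall i, (i < d)%nat -> is_lim_seq (fun n => a n i) (b i)) ->
  is_lim_seq (fun n => sum_below (a n) d) (sum_below b d).
Proof.
  induction d as [|d IH]; intros H; simpl; [apply is_lim_seq_const|].
  apply is_lim_seq_plus'; [apply IH; intros; apply H | apply H]; lia.
Qed.

Definition biv_copula (psi : R -> R) (x y : R) : R := psi (phi psi x + phi psi y).

Definition pair_point (x y : R) : nat -> R :=
  fun i => match i with O => x | S O => y | _ => 1 end.

Lemma pair_point_in_cube d x y : 0 < x <= 1 -> 0 < y <= 1 -> in_unit_cube d (pair_point x y).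
Proof. intros Hx Hy i Hi. destruct i as [|[|i]]; simpl; lra. Qed.

Section Copula.
Variable psi : R -> R.
Hypothesis G : is_generator psi.

Lemma arch_copula_pos d u : (forall i, (i < d)%nat -> 0 < u i <= 1) ->
  arch_copula d psi u = psi (sum_below (fun i => phi psi (u i)) d).
Proof.
  intros H. unfold arch_copula.
  rewrite (Rbar_sum_finite _ (fun i => phi psi (u i))); [reflexivity|].
  intros i Hi. apply (pinv_spec psi G). auto.
Qed.

Lemma arch_copula_zero d u : (exists i, (i < d)%nat /\ u i = 0) -> arch_copula d psi u = 0.
Proof.
  intros [i [Hi Hu]]. unfold arch_copula.
  destruct (Rbar_sum_ge (fun i => pinv psi (u i)) d) as [H0 Hge]; [intros; apply pinv_nonneg|].
  specialize (Hge i Hi). simpl in Hge. rewrite Hu in Hge.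
  pose proof (pinv_nonneg psi 0) as Hr.
  destruct (pinv psi 0) as [r| |] eqn:Er; simpl in Hr; try tauto;
    destruct (Rbar_sum _ d) as [s| |]; simpl in Hge, H0 |- *; try tauto; try reflexivity.
  pose proof (psi_at_pinv_0 psi G r Er).
  pose proof (generator_antitone psi G r s Hr Hge). pose proof (generator_range psi G s H0). lra.
Qed.

Lemma arch_copula_pair d x y : (2 <= d)%nat -> 0 < x <= 1 -> 0 < y <= 1 ->
  arch_copula d psi (pair_point x y) = biv_copula psi x y.
Proof.
  intros Hd Hx Hy. rewrite arch_copula_pos by (intros [|[|i]] _; simpl; lra).
  unfold biv_copula. f_equal. induction d as [|d IH]; [lia|].
  destruct (Nat.eq_dec d 1) as [->|Hne]; [simpl; ring|].
  simpl sum_below. rewrite IH by lia. destruct d as [|[|d]]; [lia | lia|].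
  simpl. rewrite (phi_1 psi G). ring.
Qed.

Lemma biv_copula_psi a b : 0 <= a -> 0 <= b -> 0 < psi a -> 0 < psi b ->
  biv_copula psi (psi a) (psi b) = psi (a + b).
Proof.
  intros Ha Hb Hpa Hpb. unfold biv_copula.
  pose proof (generator_range psi G a Ha). pose proof (generator_range psi G b Hb).
  rewrite (phi_unique psi G (psi a) a), (phi_unique psi G (psi b) b); auto; lra.
Qed.

Lemma biv_copula_le x y a b : 0 < x <= 1 -> 0 < y <= 1 -> 0 <= a -> 0 <= b ->
  x <= psi a -> y <= psi b -> biv_copula psi x y <= psi (a + b).
Proof.
  intros Hx Hy Ha Hb H1 H2. unfold biv_copula. apply (generator_antitone psi G); [lra|].
  pose proof (phi_ge psi G x a Hx Ha H1). pose proof (phi_ge psi G y b Hy Hb H2). lra.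
Qed.

Lemma biv_copula_ge x y a b : 0 < x <= 1 -> 0 < y <= 1 -> 0 <= a -> 0 <= b ->
  psi a <= x -> psi b <= y -> psi (a + b) <= biv_copula psi x y.
Proof.
  intros Hx Hy Ha Hb H1 H2. unfold biv_copula. apply (generator_antitone psi G).
  - pose proof (pinv_spec psi G x Hx). pose proof (pinv_spec psi G y Hy). lra.
  - pose proof (phi_le psi G x a Hx Ha H1). pose proof (phi_le psi G y b Hy Hb H2). lra.
Qed.

End Copula.

(** * Convergence of generators and of copulas *)

Definition converges_at (fs : nat -> R -> R) (f : R -> R) (z : R) : Prop :=
  is_lim_seq (fun n => fs n z) (f z).

Lemma cont_conv_converges_at (fs : nat -> R -> R) (f : R -> R) z :
  0 < z -> cont_conv_at fs f z -> converges_at fs f z.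
Proof. intros Hz H. exact (H (fun _ => z) (fun _ => Hz) (is_lim_seq_const z)). Qed.

Definition dense_in_pos (D : R -> Prop) : Prop :=
  forall a b, 0 < a -> a < b -> exists c, a < c < b /\ D c.

Lemma cont_conv_antitone (gs : nat -> R -> R) (g : R -> R) (D : R -> Prop) z :
  0 < z ->
  (forall n x y, 0 < x -> x <= y -> gs n y <= gs n x) ->
  dense_in_pos D ->
  (forall c, D c -> converges_at gs g c) ->
  continuous g z ->
  cont_conv_at gs g z.
Proof.
  intros Hz Hanti Hdense Hlim Hc zs Hzs Hzlim.
  apply is_lim_seq_sandwich; intros eps Heps;
    destruct (continuous_eps g z eps Hc Heps) as [del [Hdel Hnear]].
  - pose proof (Rmax_l (z / 2) (z - del)). pose proof (Rmax_r (z / 2) (z - del)).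
    destruct (Hdense (Rmax (z / 2) (z - del)) z) as [c [Hcz Dc]]; [lra | apply Rmax_lub_lt; lra|].
    exists (fun n => gs n c), (g c). split; [exact (Hlim c Dc)|]. split.
    + specialize (Hnear c ltac:(apply Rabs_lt_between; lra)). apply Rabs_lt_between in Hnear. lra.
    + apply (filter_imp (fun n => c < zs n)); [intros n Hn; apply Hanti; lra|].
      apply (is_lim_seq_eventually_gt zs z c Hzlim); lra.
  - destruct (Hdense z (z + del)) as [c [Hcz Dc]]; [lra | lra|].
    exists (fun n => gs n c), (g c). split; [exact (Hlim c Dc)|]. split.
    + specialize (Hnear c ltac:(apply Rabs_lt_between; lra)). apply Rabs_lt_between in Hnear. lra.
    + apply (filter_imp (fun n => zs n < c)); [intros n Hn; apply Hanti; [apply Hzs | lra]|].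
      apply (is_lim_seq_eventually_lt zs z c Hzlim); lra.
Qed.

Section GeneratorToCopula.
Variables (psi : R -> R) (psis : nat -> R -> R).
Hypothesis G : is_generator psi.
Hypothesis Gs : forall n, is_generator (psis n).
Hypothesis Hlim : forall z, 0 < z -> converges_at psis psi z.

Lemma converges_at_nonneg z : 0 <= z -> converges_at psis psi z.
Proof.
  intros Hz. destruct (Req_dec z 0) as [->|Hz0]; [|apply Hlim; lra].
  unfold converges_at. rewrite (generator_at_0 psi G).
  apply is_lim_seq_ext with (fun _ => 1); [intros n; rewrite (generator_at_0 _ (Gs n)); reflexivity|].
  apply is_lim_seq_const.
Qed.

Lemma phi_lim x : 0 < x <= 1 -> is_lim_seq (fun n => phi (psis n) x) (phi psi x).
Proof.
  intros Hx. destruct (Req_dec x 1) as [->|Hx1].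
  { rewrite (phi_1 psi G). apply is_lim_seq_ext with (fun _ => 0); [|apply is_lim_seq_const].
    intros n. rewrite (phi_1 _ (Gs n)). reflexivity. }
  destruct (pinv_spec psi G x Hx) as (_ & Ha0 & Hpa). set (a := phi psi x) in *.
  assert (Ha : 0 < a).
  { destruct (Req_dec a 0) as [E|E]; [|lra]. rewrite E, (generator_at_0 psi G) in Hpa. lra. }
  apply is_lim_seq_sandwich; intros eps Heps;
    pose proof (Rmin_l (eps / 2) (a / 2)); pose proof (Rmin_r (eps / 2) (a / 2));
    assert (Hdel : 0 < Rmin (eps / 2) (a / 2)) by (apply Rmin_pos; lra);
    set (del := Rmin (eps / 2) (a / 2)) in *.
  - exists (fun _ => a + del), (a + del). split; [apply is_lim_seq_const | split; [lra|]].
    assert (Hlt : psi (a + del) < x) by (rewrite <- Hpa; apply (generator_strict psi G); lra).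
    apply (filter_imp (fun n => psis n (a + del) < x)).
    + intros n Hn. apply (phi_le _ (Gs n)); lra.
    + exact (is_lim_seq_eventually_lt _ _ _ (Hlim (a + del) ltac:(lra)) Hlt).
  - exists (fun _ => a - del), (a - del). split; [apply is_lim_seq_const | split; [lra|]].
    assert (Hgt : x < psi (a - del)).
    { rewrite <- Hpa at 1. apply (generator_strict psi G); try lra.
      pose proof (generator_antitone psi G (a - del) a ltac:(lra) ltac:(lra)). lra. }
    apply (filter_imp (fun n => x < psis n (a - del))).
    + intros n Hn. apply (phi_ge _ (Gs n)); lra.
    + exact (is_lim_seq_eventually_gt _ _ _ (Hlim (a - del) ltac:(lra)) Hgt).
Qed.

Lemma generator_cont_conv_nonneg (s : nat -> R) (s0 : R) :
  (forall n, 0 <= s n) -> is_lim_seq s s0 -> is_lim_seq (fun n => psis n (s n)) (psi s0).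
Proof.
  intros Hs Hlims.
  assert (Hs0 : 0 <= s0) by (apply (is_lim_seq_le (fun _ => 0) s 0 s0); auto; apply is_lim_seq_const).
  apply is_lim_seq_sandwich; intros eps Heps;
    destruct (generator_continuous_within psi G s0 eps Hs0 Heps) as [del [Hdel Hnear]].
  - pose proof (Rmax_l 0 (s0 - del / 2)). pose proof (Rmax_r 0 (s0 - del / 2)).
    assert (Hp : Rmax 0 (s0 - del / 2) <= s0) by (apply Rmax_lub; lra).
    set (p := Rmax 0 (s0 - del / 2)) in *.
    exists (fun n => psis n p), (psi p). split; [apply converges_at_nonneg; lra|]. split.
    + specialize (Hnear p ltac:(lra) ltac:(apply Rabs_lt_between; lra)).
      apply Rabs_lt_between in Hnear. lra.
    + apply (filter_imp (fun n => s0 - del / 2 < s n)).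
      * intros n Hn. pose proof (Hs n). apply (generator_antitone _ (Gs n)); [lra|].
        unfold p; apply Rmax_lub; lra.
      * apply (is_lim_seq_eventually_gt s s0 _ Hlims); lra.
  - exists (fun n => psis n (s0 + del / 2)), (psi (s0 + del / 2)).
    split; [apply converges_at_nonneg; lra|]. split.
    + specialize (Hnear (s0 + del / 2) ltac:(lra) ltac:(apply Rabs_lt_between; lra)).
      apply Rabs_lt_between in Hnear. lra.
    + apply (filter_imp (fun n => s n < s0 + del / 2)).
      * intros n Hn. apply (generator_antitone _ (Gs n)); [apply Hs | lra].
      * apply (is_lim_seq_eventually_lt s s0 _ Hlims); lra.
Qed.

Lemma arch_copula_lim d u : in_unit_cube d u ->
  is_lim_seq (fun n => arch_copula d (psis n) u) (arch_copula d psi u).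
Proof.
  intros Hu. destruct (classic (exists i, (i < d)%nat /\ u i = 0)) as [Hz|Hnz].
  - rewrite (arch_copula_zero psi G d u Hz).
    apply is_lim_seq_ext with (fun _ => 0); [|apply is_lim_seq_const].
    intros n. rewrite (arch_copula_zero _ (Gs n) d u Hz). reflexivity.
  - assert (Hp : forall i, (i < d)%nat -> 0 < u i <= 1).
    { intros i Hi. destruct (Hu i Hi). split; [|assumption].
      destruct (Req_dec (u i) 0); [exfalso; apply Hnz; exists i; auto | lra]. }
    rewrite (arch_copula_pos psi G d u Hp).
    apply is_lim_seq_ext with (fun n => psis n (sum_below (fun i => phi (psis n) (u i)) d)).
    { intros n. rewrite (arch_copula_pos _ (Gs n) d u Hp). reflexivity. }
    apply generator_cont_conv_nonneg.
    + intros n. apply sum_below_nonneg. intros i Hi. apply (pinv_spec _ (Gs n)); auto.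
    + apply (sum_below_lim (fun n i => phi (psis n) (u i))). intros i Hi. apply phi_lim; auto.
Qed.

End GeneratorToCopula.

Section CopulaToGenerator.
Variables (psi : R -> R) (psis : nat -> R -> R).
Hypothesis G : is_generator psi.
Hypothesis Gs : forall n, is_generator (psis n).
Hypothesis Hbiv : forall x y, 0 < x <= 1 -> 0 < y <= 1 ->
  is_lim_seq (fun n => biv_copula (psis n) x y) (biv_copula psi x y).
Hypothesis Hnorm : psi 1 = / 2.
Hypothesis Hnorms : forall n, psis n 1 = / 2.

Lemma converges_at_beyond_zero a b : 0 <= a -> a <= b -> psi a = 0 ->
  converges_at psis psi a -> converges_at psis psi b.
Proof.
  intros Ha Hab Hpa Qa. unfold converges_at in *.
  replace (psi b) with 0 by (pose proof (generator_antitone psi G a b Ha Hab);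
                              pose proof (generator_range psi G b ltac:(lra)); lra).
  rewrite Hpa in Qa. apply is_lim_seq_le_le with (fun _ => 0) (fun n => psis n a).
  - intros n. split; [apply (generator_range _ (Gs n)); lra | apply (generator_antitone _ (Gs n)); lra].
  - apply is_lim_seq_const.
  - exact Qa.
Qed.

Lemma eventually_le_biv a b x y : 0 <= a -> 0 <= b -> 0 < x <= 1 -> 0 < y <= 1 ->
  psi a < x -> psi b < y -> converges_at psis psi a -> converges_at psis psi b ->
  eventually (fun n => psis n (a + b) <= biv_copula (psis n) x y).
Proof.
  intros Ha Hb Hx Hy Hxa Hyb Qa Qb.
  apply (filter_imp (fun n => psis n a < x /\ psis n b < y)).
  - intros n [A B]. apply (biv_copula_ge _ (Gs n)); lra.
  - apply filter_and; [exact (is_lim_seq_eventually_lt _ _ _ Qa Hxa)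
                     | exact (is_lim_seq_eventually_lt _ _ _ Qb Hyb)].
Qed.

Lemma eventually_biv_le a b x y : 0 <= a -> 0 <= b -> 0 < x <= 1 -> 0 < y <= 1 ->
  x < psi a -> y < psi b -> converges_at psis psi a -> converges_at psis psi b ->
  eventually (fun n => biv_copula (psis n) x y <= psis n (a + b)).
Proof.
  intros Ha Hb Hx Hy Hxa Hyb Qa Qb.
  apply (filter_imp (fun n => x < psis n a /\ y < psis n b)).
  - intros n [A B]. apply (biv_copula_le _ (Gs n)); lra.
  - apply filter_and; [exact (is_lim_seq_eventually_gt _ _ _ Qa Hxa)
                     | exact (is_lim_seq_eventually_gt _ _ _ Qb Hyb)].
Qed.

Lemma converges_at_add_limsup a b : 0 < a -> 0 < b -> 0 < psi a -> 0 < psi b ->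
  converges_at psis psi a -> converges_at psis psi b ->
  limsup_at_most (fun n => psis n (a + b)) (psi (a + b)).
Proof.
  intros Ha Hb Hpa Hpb Qa Qb eps Heps.
  destruct (continuous_eps _ _ eps (generator_continuous psi G (a + b) ltac:(lra)) Heps)
    as [del [Hdel Hnear]].
  pose proof (Rmin_l (del / 4) (Rmin (a / 2) (b / 2))).
  pose proof (Rmin_r (del / 4) (Rmin (a / 2) (b / 2))).
  pose proof (Rmin_l (a / 2) (b / 2)). pose proof (Rmin_r (a / 2) (b / 2)).
  assert (Hh : 0 < Rmin (del / 4) (Rmin (a / 2) (b / 2))) by (repeat apply Rmin_pos; lra).
  set (h := Rmin (del / 4) (Rmin (a / 2) (b / 2))) in *.
  pose proof (generator_antitone psi G (a - h) a ltac:(lra) ltac:(lra)).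
  pose proof (generator_antitone psi G (b - h) b ltac:(lra) ltac:(lra)).
  pose proof (generator_range psi G (a - h) ltac:(lra)).
  pose proof (generator_range psi G (b - h) ltac:(lra)).
  assert (Hxa : psi a < psi (a - h)) by (apply (generator_strict psi G); lra).
  assert (Hyb : psi b < psi (b - h)) by (apply (generator_strict psi G); lra).
  exists (fun n => biv_copula (psis n) (psi (a - h)) (psi (b - h))), (psi (a - h + (b - h))).
  split; [|split].
  - rewrite <- (biv_copula_psi psi G (a - h) (b - h)) by lra. apply Hbiv; lra.
  - specialize (Hnear (a - h + (b - h)) ltac:(apply Rabs_lt_between; lra)).
    apply Rabs_lt_between in Hnear. lra.
  - apply eventually_le_biv; auto; lra.
Qed.

Lemma converges_at_add_liminf a b : 0 < a -> 0 < b ->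
  converges_at psis psi a -> converges_at psis psi b ->
  liminf_at_least (fun n => psis n (a + b)) (psi (a + b)).
Proof.
  intros Ha Hb Qa Qb eps Heps.
  destruct (Rle_lt_dec (psi (a + b)) 0) as [E|E].
  { exists (fun _ => 0), 0. split; [apply is_lim_seq_const | split; [lra|]].
    exists 0%nat. intros n _. apply (generator_range _ (Gs n)). lra. }
  destruct (continuous_eps _ _ (Rmin eps (psi (a + b) / 2))
              (generator_continuous psi G (a + b) ltac:(lra))) as [del [Hdel Hnear]];
    [apply Rmin_pos; lra|].
  pose proof (Rmin_l eps (psi (a + b) / 2)). pose proof (Rmin_r eps (psi (a + b) / 2)).
  set (h := del / 4). assert (Hh : 0 < h /\ h + h < del) by (unfold h; lra).
  specialize (Hnear (a + h + (b + h)) ltac:(apply Rabs_lt_between; lra)).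
  apply Rabs_lt_between in Hnear.
  pose proof (generator_antitone psi G (a + h) (a + h + (b + h)) ltac:(lra) ltac:(lra)).
  pose proof (generator_antitone psi G (b + h) (a + h + (b + h)) ltac:(lra) ltac:(lra)).
  pose proof (generator_range psi G (a + h) ltac:(lra)).
  pose proof (generator_range psi G (b + h) ltac:(lra)).
  pose proof (generator_antitone psi G a (a + b) ltac:(lra) ltac:(lra)).
  pose proof (generator_antitone psi G b (a + b) ltac:(lra) ltac:(lra)).
  assert (Hxa : psi (a + h) < psi a) by (apply (generator_strict psi G); lra).
  assert (Hyb : psi (b + h) < psi b) by (apply (generator_strict psi G); lra).
  exists (fun n => biv_copula (psis n) (psi (a + h)) (psi (b + h))), (psi (a + h + (b + h))).
  split; [|split].
  - rewrite <- (biv_copula_psi psi G (a + h) (b + h)) by lra. apply Hbiv; lra.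
  - lra.
  - apply eventually_biv_le; auto; lra.
Qed.

Lemma converges_at_add a b : 0 < a -> 0 < b ->
  converges_at psis psi a -> converges_at psis psi b -> converges_at psis psi (a + b).
Proof.
  intros Ha Hb Qa Qb.
  pose proof (generator_range psi G a ltac:(lra)). pose proof (generator_range psi G b ltac:(lra)).
  destruct (Rle_lt_dec (psi a) 0) as [Ea|Ea]; [apply (converges_at_beyond_zero a); auto; lra|].
  destruct (Rle_lt_dec (psi b) 0) as [Eb|Eb]; [apply (converges_at_beyond_zero b); auto; lra|].
  apply is_lim_seq_sandwich;
    [apply converges_at_add_limsup | apply converges_at_add_liminf]; assumption.
Qed.

Lemma eventually_le_of_biv_gt a x : 0 < a -> 0 < x <= 1 -> converges_at psis psi (a + a) ->
  psi (a + a) < biv_copula psi x x -> eventually (fun n => psis n a <= x).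
Proof.
  intros Ha Hx Q2 Hlt. set (mid := (psi (a + a) + biv_copula psi x x) / 2).
  apply (filter_imp (fun n => psis n (a + a) < mid /\ mid < biv_copula (psis n) x x)).
  - intros n [A B]. apply Rnot_lt_le. intros Hxa.
    pose proof (biv_copula_le _ (Gs n) x x a a Hx Hx ltac:(lra) ltac:(lra) ltac:(lra) ltac:(lra)).
    lra.
  - apply filter_and.
    + apply (is_lim_seq_eventually_lt _ _ _ Q2). unfold mid. lra.
    + apply (is_lim_seq_eventually_gt _ _ _ (Hbiv x x Hx Hx)). unfold mid. lra.
Qed.

Lemma eventually_ge_of_biv_lt a x : 0 < a -> 0 < x <= 1 -> converges_at psis psi (a + a) ->
  biv_copula psi x x < psi (a + a) -> eventually (fun n => x <= psis n a).
Proof.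
  intros Ha Hx Q2 Hlt. set (mid := (psi (a + a) + biv_copula psi x x) / 2).
  apply (filter_imp (fun n => mid < psis n (a + a) /\ biv_copula (psis n) x x < mid)).
  - intros n [A B]. apply Rnot_lt_le. intros Hxa.
    pose proof (biv_copula_ge _ (Gs n) x x a a Hx Hx ltac:(lra) ltac:(lra) ltac:(lra) ltac:(lra)).
    lra.
  - apply filter_and.
    + apply (is_lim_seq_eventually_gt _ _ _ Q2). unfold mid. lra.
    + apply (is_lim_seq_eventually_lt _ _ _ (Hbiv x x Hx Hx)). unfold mid. lra.
Qed.

Lemma converges_at_half a : 0 < a -> 0 < psi (a + a) ->
  converges_at psis psi (a + a) -> converges_at psis psi a.
Proof.
  intros Ha Hpos Q2.
  pose proof (generator_continuous psi G a Ha) as Hc.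
  pose proof (generator_antitone psi G a (a + a) ltac:(lra) ltac:(lra)).
  apply is_lim_seq_sandwich; intros eps Heps;
    destruct (continuous_eps _ _ eps Hc Heps) as [del [Hdel Hnear]].
  - pose proof (Rmin_l (del / 2) (a / 2)). pose proof (Rmin_r (del / 2) (a / 2)).
    assert (Hh : 0 < Rmin (del / 2) (a / 2)) by (apply Rmin_pos; lra).
    set (a' := a - Rmin (del / 2) (a / 2)).
    pose proof (generator_antitone psi G a' a ltac:(unfold a'; lra) ltac:(unfold a'; lra)).
    pose proof (generator_antitone psi G (a' + a') (a + a) ltac:(unfold a'; lra) ltac:(unfold a'; lra)).
    pose proof (generator_range psi G a' ltac:(unfold a'; lra)).
    exists (fun _ => psi a'), (psi a'). split; [apply is_lim_seq_const | split].
    + specialize (Hnear a' ltac:(apply Rabs_lt_between; unfold a'; lra)).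
      apply Rabs_lt_between in Hnear. lra.
    + apply eventually_le_of_biv_gt; auto; [lra|].
      rewrite (biv_copula_psi psi G) by (unfold a' in *; lra).
      apply (generator_strict psi G); unfold a' in *; lra.
  - destruct (continuous_eps _ _ (psi (a + a) / 2) (generator_continuous psi G (a + a) ltac:(lra)))
      as [del2 [Hdel2 Hnear2]]; [lra|].
    pose proof (Rmin_l (del / 2) (del2 / 4)). pose proof (Rmin_r (del / 2) (del2 / 4)).
    assert (Hh : 0 < Rmin (del / 2) (del2 / 4)) by (apply Rmin_pos; lra).
    set (a' := a + Rmin (del / 2) (del2 / 4)).
    specialize (Hnear2 (a' + a') ltac:(apply Rabs_lt_between; unfold a'; lra)).
    apply Rabs_lt_between in Hnear2.
    pose proof (generator_antitone psi G a' (a' + a') ltac:(unfold a'; lra) ltac:(unfold a'; lra)).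
    pose proof (generator_range psi G a' ltac:(unfold a'; lra)).
    exists (fun _ => psi a'), (psi a'). split; [apply is_lim_seq_const | split].
    + specialize (Hnear a' ltac:(apply Rabs_lt_between; unfold a'; lra)).
      apply Rabs_lt_between in Hnear. lra.
    + apply eventually_ge_of_biv_lt; auto; [lra|].
      rewrite (biv_copula_psi psi G) by (unfold a' in *; lra).
      apply (generator_strict psi G); unfold a' in *; lra.
Qed.

Lemma converges_at_dyadic j m : (1 <= j)%nat -> converges_at psis psi (INR j / 2 ^ m).
Proof.
  assert (Hp : forall m, 0 < 2 ^ m) by (intros; apply pow_lt; lra).
  assert (Hunit : forall k, converges_at psis psi (1 / 2 ^ k)).
  { intros k. induction k as [|k IH].
    - unfold converges_at. replace (1 / 2 ^ 0) with 1 by (simpl; field). rewrite Hnorm.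
      apply is_lim_seq_ext with (fun _ => / 2); [intros n; rewrite Hnorms; reflexivity|].
      apply is_lim_seq_const.
    - assert (E : 1 / 2 ^ k = 1 / 2 ^ S k + 1 / 2 ^ S k)
        by (simpl; field; apply pow_nonzero; lra).
      assert (Hle : 1 / 2 ^ k <= 1).
      { unfold Rdiv. rewrite Rmult_1_l, <- Rinv_1. apply Rinv_le_contravar; [lra|].
        apply pow_R1_Rle. lra. }
      assert (Hpos : 0 < 1 / 2 ^ k) by (apply Rdiv_lt_0_compat; [lra | apply Hp]).
      apply converges_at_half; [apply Rdiv_lt_0_compat; [lra | apply Hp] | rewrite <- E | rewrite <- E; exact IH].
      pose proof (generator_antitone psi G (1 / 2 ^ k) 1 ltac:(lra) Hle). lra. }
  intros Hj. induction j as [|j IH]; [lia|].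
  destruct (Nat.eq_dec j 0) as [->|Hj0]; [simpl INR; exact (Hunit m)|].
  replace (INR (S j) / 2 ^ m) with (INR j / 2 ^ m + 1 / 2 ^ m)
    by (rewrite S_INR; field; apply pow_nonzero; lra).
  apply converges_at_add.
  - apply Rdiv_lt_0_compat; [apply lt_0_INR; lia | apply Hp].
  - apply Rdiv_lt_0_compat; [lra | apply Hp].
  - apply IH. lia.
  - apply Hunit.
Qed.

Lemma generator_cont_conv_of_biv z : 0 < z -> cont_conv_at psis psi z.
Proof.
  intros Hz.
  apply (cont_conv_antitone psis psi (fun c => exists j m, (1 <= j)%nat /\ c = INR j / 2 ^ m)).
  - exact Hz.
  - intros n x y Hx Hxy. apply (generator_antitone _ (Gs n)); lra.
  - intros a b Ha Hab. destruct (dyadic_dense a b ltac:(lra) Hab) as (j & m & Hj & Hc).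
    exists (INR j / 2 ^ m). split; [exact Hc | exists j, m; auto].
  - intros c (j & m & Hj & ->). apply converges_at_dyadic. exact Hj.
  - apply generator_continuous; assumption.
Qed.

End CopulaToGenerator.

(** * Slopes, increments and continuous convergence *)

Definition slope_sandwich (g H : R -> R) : Prop :=
  forall s t, 0 < s -> s < t -> H s * (t - s) <= g t - g s <= H t * (t - s).

Lemma div_between (a b x h : R) : 0 < h -> a * h <= x <= b * h -> a <= x / h <= b.
Proof.
  intros Hh [H1 H2]. unfold Rdiv.
  split; apply (Rmult_le_reg_r h); try lra; rewrite Rmult_assoc, Rinv_l; lra.
Qed.

Lemma slope_sandwich_mono (g H : R -> R) : slope_sandwich g H ->
  forall s t, 0 < s -> s <= t -> H s <= H t.
Proof.
  intros B s t Hs Hst. destruct (Req_dec s t) as [->|E]; [lra|].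
  destruct (B s t Hs ltac:(lra)). apply (Rmult_le_reg_r (t - s)); lra.
Qed.

Lemma slope_sandwich_of_deriv (g H : R -> R) :
  (forall x, 0 < x -> is_derive g x (H x)) ->
  (forall x y, 0 < x -> x <= y -> H x <= H y) ->
  slope_sandwich g H.
Proof.
  intros Hd Hmono s t Hs Hst.
  destruct (MVT_cor2 g H s t Hst) as [c [E Hc]].
  { intros c Hc. apply is_derive_Reals, Hd. lra. }
  rewrite E. pose proof (Hmono s c Hs ltac:(lra)). pose proof (Hmono c t ltac:(lra) ltac:(lra)).
  split; apply Rmult_le_compat_r; lra.
Qed.

Lemma slope_sandwich_is_derive (g H : R -> R) z : slope_sandwich g H -> 0 < z ->
  continuous H z -> is_derive g z (H z).
Proof.
  intros B Hz Hc. apply is_derive_Reals. intros eps Heps.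
  destruct (continuous_eps H z eps Hc Heps) as [del [Hdel Hnear]].
  assert (Hr : 0 < Rmin del z) by (apply Rmin_pos; lra).
  exists (mkposreal _ Hr). intros h Hh0 Hh. simpl in Hh.
  pose proof (Rmin_l del z). pose proof (Rmin_r del z). apply Rabs_lt_between in Hh.
  specialize (Hnear (z + h) ltac:(apply Rabs_lt_between; lra)).
  apply Rabs_lt_between in Hnear. apply Rabs_lt_between.
  destruct (Rle_lt_dec 0 h) as [Hpos|Hneg].
  - destruct (B z (z + h) Hz ltac:(lra)) as [B1 B2].
    replace (z + h - z) with h in B1, B2 by ring.
    pose proof (div_between (H z) (H (z + h)) (g (z + h) - g z) h ltac:(lra) (conj B1 B2)). lra.
  - destruct (B (z + h) z ltac:(lra) ltac:(lra)) as [B1 B2].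
    replace (z - (z + h)) with (- h) in B1, B2 by ring.
    pose proof (div_between (H (z + h)) (H z) (g z - g (z + h)) (- h) ltac:(lra) (conj B1 B2)).
    replace ((g (z + h) - g z) / h) with ((g z - g (z + h)) / - h) by (field; lra). lra.
Qed.

Lemma cont_conv_shift (gs : nat -> R -> R) (g : R -> R) (zs : nat -> R) (z c : R) :
  (forall y, 0 < y -> cont_conv_at gs g y) ->
  (forall n, 0 < zs n) -> is_lim_seq zs z -> 0 < z + c ->
  is_lim_seq (fun n => gs n (zs n + c)) (g (z + c)).
Proof.
  intros CC Hzs Hl Hzc.
  set (ws := fun n => if Rlt_dec 0 (zs n + c) then zs n + c else z + c).
  assert (Hl' : is_lim_seq (fun n => zs n + c) (z + c))
    by (apply is_lim_seq_plus'; [exact Hl | apply is_lim_seq_const]).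
  assert (Ev : eventually (fun n => ws n = zs n + c)).
  { apply (filter_imp (fun n => 0 < zs n + c)).
    - intros n Hn. unfold ws. destruct Rlt_dec; [reflexivity | lra].
    - exact (is_lim_seq_eventually_gt _ _ 0 Hl' Hzc). }
  assert (Hws : forall n, 0 < ws n) by (intros n; unfold ws; destruct Rlt_dec; lra).
  apply is_lim_seq_ext_loc with (fun n => gs n (ws n)).
  - apply (filter_imp _ _ (fun n Hn => f_equal (gs n) Hn) Ev).
  - apply (CC (z + c) Hzc ws Hws). apply is_lim_seq_ext_loc with (fun n => zs n + c); [|exact Hl'].
    apply (filter_imp _ _ (fun n Hn => eq_sym Hn) Ev).
Qed.

Lemma difference_quotient_lim (u v : nat -> R) (a b h : R) :
  is_lim_seq u a -> is_lim_seq v b -> is_lim_seq (fun n => (u n - v n) / h) ((a - b) / h).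
Proof.
  intros Hu Hv. exact (is_lim_seq_mult' _ _ _ _ (is_lim_seq_minus' _ _ _ _ Hu Hv)
                         (is_lim_seq_const (/ h))).
Qed.

Lemma cont_conv_slope (gs Hs : nat -> R -> R) (g H : R -> R) z :
  (forall n, slope_sandwich (gs n) (Hs n)) ->
  (forall y, 0 < y -> cont_conv_at gs g y) -> 0 < z -> is_derive g z (H z) ->
  cont_conv_at Hs H z.
Proof.
  intros B CC Hz Hd zs Hzs Hl. apply is_derive_Reals in Hd.
  pose proof (CC z Hz zs Hzs Hl) as L0.
  apply is_lim_seq_sandwich; intros eps Heps; destruct (Hd eps Heps) as [del Hdel];
    pose proof (Rmin_l (del / 2) (z / 4)); pose proof (Rmin_r (del / 2) (z / 4));
    assert (Hh : 0 < Rmin (del / 2) (z / 4)) by (apply Rmin_pos; [pose proof (cond_pos del)|]; lra);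
    set (h := Rmin (del / 2) (z / 4)) in *.
  - exists (fun n => (gs n (zs n + h) - gs n (zs n)) / h), ((g (z + h) - g z) / h).
    split; [apply difference_quotient_lim; [apply cont_conv_shift|]; auto; lra|]. split.
    + specialize (Hdel h ltac:(lra) ltac:(rewrite Rabs_right; lra)).
      apply Rabs_lt_between in Hdel. lra.
    + exists 0%nat. intros n _. destruct (B n (zs n) (zs n + h) (Hzs n) ltac:(lra)) as [B1 B2].
      replace (zs n + h - zs n) with h in B1, B2 by ring.
      apply (div_between _ (Hs n (zs n + h))); [lra | split; assumption].
  - exists (fun n => (gs n (zs n) - gs n (zs n + - h)) / h), ((g z - g (z + - h)) / h).
    split; [apply difference_quotient_lim; [|apply cont_conv_shift]; auto; lra|]. split.
    + specialize (Hdel (- h) ltac:(lra) ltac:(rewrite Rabs_left; lra)).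
      replace ((g z - g (z + - h)) / h) with ((g (z + - h) - g z) / - h) by (field; lra).
      apply Rabs_lt_between in Hdel. lra.
    + apply (filter_imp (fun n => z / 2 < zs n)).
      * intros n Hn. destruct (B n (zs n + - h) (zs n) ltac:(lra) ltac:(lra)) as [B1 B2].
        replace (zs n - (zs n + - h)) with h in B1, B2 by ring.
        apply (div_between (Hs n (zs n + - h))); [lra | split; assumption].
      * apply (is_lim_seq_eventually_gt _ _ _ Hl). lra.
Qed.

Lemma exists_mesh (L r : R) : 0 < r -> exists N, (1 <= N)%nat /\ L / INR N < r.
Proof.
  intros Hr. set (N := S (Z.to_nat (up (Rabs L / r)))).
  assert (HN : Rabs L / r < INR N).
  { destruct (archimed (Rabs L / r)) as [Hup _]. unfold N. rewrite S_INR.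
    destruct (Z_le_gt_dec 0 (up (Rabs L / r))) as [Hz|Hz].
    - rewrite INR_IZR_INZ, Z2Nat.id by exact Hz. lra.
    - apply Z.gt_lt, IZR_lt in Hz. pose proof (pos_INR (Z.to_nat (up (Rabs L / r)))). lra. }
  assert (HN0 : 0 < INR N) by (apply lt_0_INR; unfold N; lia).
  exists N. split; [unfold N; lia|].
  apply (Rmult_lt_compat_l r) in HN; [|lra].
  replace (r * (Rabs L / r)) with (Rabs L) in HN by (field; lra).
  unfold Rdiv. apply (Rmult_lt_reg_r (INR N)); [lra|].
  rewrite Rmult_assoc, Rinv_l, Rmult_1_r by lra. pose proof (Rle_abs L). lra.
Qed.

Lemma sum_below_shift2 (f : nat -> R) N :
  sum_below (fun i => f (S (S i))) N - sum_below f N = f (S N) + f N - f 1%nat - f 0%nat.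
Proof. induction N as [|N IH]; simpl in *; lra. Qed.

(* The tags lag the partition by one cell on the left and lead it by one on the right,
   so monotonicity of [H] bounds every increment from both sides. *)
Lemma riemann_sandwich (g H : R -> R) (z del : R) (c : nat -> R) N :
  slope_sandwich g H -> 0 < del ->
  (forall i, 0 < c i /\ z + (INR i - 1) * del < c i < z + INR i * del) ->
  del * sum_below (fun i => H (c i)) N <= g (z + INR N * del) - g z
    <= del * sum_below (fun i => H (c (S (S i)))) N.
Proof.
  intros B Hdel Hc. induction N as [|N IH].
  - simpl. rewrite Rmult_0_l, Rplus_0_r. lra.
  - set (t := z + INR N * del) in IH.
    replace (z + INR (S N) * del) with (t + del) by (unfold t; rewrite S_INR; ring).
    destruct (Hc N) as (HcN & HcN1 & HcN2). destruct (Hc (S (S N))) as (_ & HcS & _).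
    rewrite !S_INR in HcS.
    destruct (B t (t + del) ltac:(unfold t in *; lra) ltac:(lra)) as [B1 B2].
    replace (t + del - t) with del in B1, B2 by ring.
    pose proof (slope_sandwich_mono g H B (c N) t HcN ltac:(unfold t in *; lra)).
    pose proof (slope_sandwich_mono g H B (t + del) (c (S (S N))) ltac:(unfold t in *; lra)
                  ltac:(unfold t in *; lra)).
    assert (del * H (c N) <= del * H t) by (apply Rmult_le_compat_l; lra).
    assert (del * H (t + del) <= del * H (c (S (S N)))) by (apply Rmult_le_compat_l; lra).
    simpl sum_below. lra.
Qed.

Lemma riemann_gap (g H : R -> R) (z del : R) (c : nat -> R) N :
  slope_sandwich g H -> 0 < del <= z / 2 ->
  (forall i, 0 < c i /\ z + (INR i - 1) * del < c i < z + INR i * del) ->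
  sum_below (fun i => H (c (S (S i)))) N - sum_below (fun i => H (c i)) N
    <= 2 * (H (z + INR N * del + z) - H (z / 2)).
Proof.
  intros B Hdel Hc. pose proof (sum_below_shift2 (fun i => H (c i)) N) as Eshift.
  cbv beta in Eshift. rewrite Eshift.
  assert (Hbig : forall i, (i <= S N)%nat -> H (c i) <= H (z + INR N * del + z)).
  { intros i Hi. apply (slope_sandwich_mono g H B); [apply Hc|].
    destruct (Hc i) as (_ & _ & Hi'). apply le_INR in Hi. rewrite S_INR in Hi. nra. }
  assert (Hsmall : forall i, H (z / 2) <= H (c i)).
  { intros i. apply (slope_sandwich_mono g H B); [lra|].
    destruct (Hc i) as (_ & Hi' & _). pose proof (pos_INR i).
    assert (0 <= INR i * del) by (apply Rmult_le_pos; lra). nra. }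
  pose proof (Hbig (S N) ltac:(lia)). pose proof (Hbig N ltac:(lia)).
  pose proof (Hsmall 1%nat). pose proof (Hsmall 0%nat). lra.
Qed.

Lemma exists_tags (D : R -> Prop) z del : dense_in_pos D -> 0 < del < z ->
  exists c : nat -> R, forall i,
    (0 < c i /\ z + (INR i - 1) * del < c i < z + INR i * del) /\ D (c i).
Proof.
  intros Hdense Hdel.
  destruct (functional_choice
              (fun i c => z + (INR i - 1) * del < c < z + INR i * del /\ D c)) as [c Hc].
  { intros i. pose proof (pos_INR i). assert (0 <= INR i * del) by (apply Rmult_le_pos; lra).
    apply Hdense; nra. }
  exists c. intros i. destruct (Hc i) as [Hi HD]. split; [split; [|exact Hi] | exact HD].
  pose proof (pos_INR i). assert (0 <= INR i * del) by (apply Rmult_le_pos; lra). nra.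
Qed.

Lemma increment_approx (gs Hs : nat -> R -> R) (g H : R -> R) (D : R -> Prop) z w eps :
  (forall n, slope_sandwich (gs n) (Hs n)) -> slope_sandwich g H ->
  dense_in_pos D ->
  (forall c, D c -> converges_at Hs H c) ->
  0 < z -> z < w -> 0 < eps ->
  exists (A B : nat -> R) (a b : R), is_lim_seq A a /\ is_lim_seq B b /\ b - a < eps /\
    a <= g w - g z <= b /\ forall n, A n <= gs n w - gs n z <= B n.
Proof.
  intros Bs B Hdense Hlim Hz Hzw Heps.
  set (K := H (w + z) - H (z / 2)).
  assert (HK : 0 <= K) by (pose proof (slope_sandwich_mono g H B (z / 2) (w + z)); unfold K; lra).
  destruct (exists_mesh (w - z) (Rmin (z / 2) (eps / (2 * (K + 1))))) as [N [HN Hmesh]].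
  { apply Rmin_pos; [lra | apply Rdiv_lt_0_compat; lra]. }
  pose proof (Rmin_l (z / 2) (eps / (2 * (K + 1)))).
  pose proof (Rmin_r (z / 2) (eps / (2 * (K + 1)))).
  assert (HN0 : 0 < INR N) by (apply lt_0_INR; lia).
  set (del := (w - z) / INR N) in Hmesh.
  assert (Hdel : 0 < del) by (unfold del; apply Rdiv_lt_0_compat; lra).
  assert (Hw : z + INR N * del = w) by (unfold del; field; lra).
  assert (Hgap : del * (2 * K) < eps).
  { apply Rle_lt_trans with (del * (2 * (K + 1))); [apply Rmult_le_compat_l; lra|].
    assert (Hd2 : del < eps / (2 * (K + 1))) by lra.
    apply (Rmult_lt_compat_r (2 * (K + 1))) in Hd2; [|lra].
    replace (eps / (2 * (K + 1)) * (2 * (K + 1))) with eps in Hd2 by (field; lra). lra. }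
  destruct (exists_tags D z del Hdense ltac:(lra)) as [c Hc].
  exists (fun n => del * sum_below (fun i => Hs n (c i)) N),
         (fun n => del * sum_below (fun i => Hs n (c (S (S i)))) N),
         (del * sum_below (fun i => H (c i)) N), (del * sum_below (fun i => H (c (S (S i)))) N).
  split; [|split; [|split; [|split]]].
  - apply (is_lim_seq_scal_l _ del (sum_below (fun i => H (c i)) N)).
    apply (sum_below_lim (fun n i => Hs n (c i))). intros i _. apply Hlim, Hc.
  - apply (is_lim_seq_scal_l _ del (sum_below (fun i => H (c (S (S i)))) N)).
    apply (sum_below_lim (fun n i => Hs n (c (S (S i))))). intros i _. apply Hlim, Hc.
  - rewrite <- Rmult_minus_distr_l. apply Rle_lt_trans with (del * (2 * K)); [|exact Hgap].
    apply Rmult_le_compat_l; [lra|]. unfold K. rewrite <- Hw.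
    apply (riemann_gap g); [exact B | lra | intros i; apply Hc].
  - rewrite <- Hw. apply riemann_sandwich; [exact B | exact Hdel | intros i; apply Hc].
  - intros n. rewrite <- Hw. apply riemann_sandwich; [apply Bs | exact Hdel | intros i; apply Hc].
Qed.

Lemma increment_lim (gs Hs : nat -> R -> R) (g H : R -> R) (D : R -> Prop) z w :
  (forall n, slope_sandwich (gs n) (Hs n)) -> slope_sandwich g H ->
  dense_in_pos D ->
  (forall c, D c -> converges_at Hs H c) ->
  0 < z -> z < w -> is_lim_seq (fun n => gs n w - gs n z) (g w - g z).
Proof.
  intros Bs B Hdense Hlim Hz Hzw.
  apply is_lim_seq_sandwich; intros eps Heps;
    destruct (increment_approx gs Hs g H D z w eps Bs B Hdense Hlim Hz Hzw Heps)
      as (A & Bn & a & b & HA & HB & Hab & Hlim_ab & Hn).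
  - exists Bn, b. split; [exact HB | split; [lra | exists 0%nat; intros n _; apply Hn]].
  - exists A, a. split; [exact HA | split; [lra | exists 0%nat; intros n _; apply Hn]].
Qed.

(** * Convex and monotone functions *)

Lemma lim_filtermap {T : Type} (f : T -> R) (F : (T -> Prop) -> Prop) (l : R) :
  ProperFilter F -> filterlim f F (locally l) -> lim (filtermap f F) = l.
Proof.
  intros FF Hf. assert (PG : ProperFilter (filtermap f F)) by (apply filtermap_proper_filter; exact FF).
  apply (is_filter_lim_unique (FF := Proper_StrongProper _ PG)); [|exact Hf].
  intros P [eps HP]. apply (filter_imp (ball (lim (filtermap f F)) eps)); [exact HP|].
  apply complete_cauchy; [exact PG|]. intros e. exists l. apply Hf, locally_ball.
Qed.

Lemma Rdiv_le_cross p q r s : 0 < q -> 0 < s -> p * s <= r * q -> p / q <= r / s.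
Proof.
  intros Hq Hs H. apply (Rmult_le_reg_r (q * s)); [apply Rmult_lt_0_compat; assumption|].
  replace (p / q * (q * s)) with (p * s) by (field; lra).
  replace (r / s * (q * s)) with (r * q) by (field; lra). exact H.
Qed.

Section ConvexLeftDerivative.
Variable g : R -> R.
Hypothesis Hconvex : forall x y t, 0 < x -> 0 < y -> 0 <= t <= 1 ->
  g (t * x + (1 - t) * y) <= t * g x + (1 - t) * g y.

Definition slope (a b : R) : R := (g b - g a) / (b - a).

Lemma convex_three_points a b c : 0 < a -> a < b -> b < c ->
  (c - a) * g b <= (c - b) * g a + (b - a) * g c.
Proof.
  intros Ha Hab Hbc. set (t := (c - b) / (c - a)).
  assert (Ht : 0 <= t <= 1).
  { unfold t. split; [apply Rmult_le_pos; [lra | left; apply Rinv_0_lt_compat; lra]|].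
    apply (Rmult_le_reg_r (c - a)); [lra|]. unfold Rdiv. rewrite Rmult_assoc, Rinv_l; lra. }
  pose proof (Hconvex a c t Ha ltac:(lra) Ht) as H.
  replace (t * a + (1 - t) * c) with b in H by (unfold t; field; lra).
  apply (Rmult_le_compat_l (c - a)) in H; [|lra].
  replace ((c - a) * (t * g a + (1 - t) * g c)) with ((c - b) * g a + (b - a) * g c) in H
    by (unfold t; field; lra). exact H.
Qed.


Lemma slope_increasing_left a b c : 0 < a -> a < b -> b < c -> slope a c <= slope b c.
Proof.
  intros. unfold slope. apply Rdiv_le_cross; try lra.
  pose proof (convex_three_points a b c H H0 H1). nra.
Qed.

Lemma slope_increasing a b c : 0 < a -> a < b -> b < c -> slope a b <= slope b c.
Proof.
  intros Ha Hab Hbc. apply Rle_trans with (slope a c); [|apply slope_increasing_left; assumption].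
  unfold slope. apply Rdiv_le_cross; try lra.
  pose proof (convex_three_points a b c Ha Hab Hbc). nra.
Qed.

Definition left_slopes (z v : R) : Prop := exists x, 0 < x < z /\ v = slope x z.

Lemma left_slopes_bound z : 0 < z -> bound (left_slopes z).
Proof. intros Hz. exists (slope z (z + 1)). intros v [x [Hx ->]]. apply slope_increasing; lra. Qed.

Lemma left_slopes_inhabited z : 0 < z -> exists v, left_slopes z v.
Proof. intros Hz. exists (slope (z / 2) z), (z / 2). split; [lra | reflexivity]. Qed.

(* The left derivative of [g] at [z] (junk value 0 for [z <= 0]). *)
Definition left_slope (z : R) : R :=
  match Rlt_dec 0 z with
  | left Hz => proj1_sig (completeness _ (left_slopes_bound z Hz) (left_slopes_inhabited z Hz))
  | right _ => 0
  end.

Lemma left_slope_lub z : 0 < z -> is_lub (left_slopes z) (left_slope z).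
Proof.
  intros Hz. unfold left_slope. destruct (Rlt_dec 0 z) as [H|H]; [|lra].
  destruct completeness as [m Hm]. exact Hm.
Qed.

Lemma slope_le_left_slope x z : 0 < x < z -> slope x z <= left_slope z.
Proof. intros Hx. apply (left_slope_lub z ltac:(lra)). exists x. auto. Qed.

Lemma left_slope_le_slope z h : 0 < z -> 0 < h -> left_slope z <= slope z (z + h).
Proof. intros Hz Hh. apply (left_slope_lub z Hz). intros v [x [Hx ->]]. apply slope_increasing; lra. Qed.

Lemma slope_sandwich_left_slope : slope_sandwich g left_slope.
Proof.
  intros s t Hs Hst. pose proof (left_slope_le_slope s (t - s) Hs ltac:(lra)) as H1.
  pose proof (slope_le_left_slope s t ltac:(lra)) as H2.
  replace (s + (t - s)) with t in H1 by ring. unfold slope in *.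
  split; [apply (Rmult_le_compat_r (t - s)) in H1 | apply (Rmult_le_compat_r (t - s)) in H2];
    try lra; replace ((g t - g s) / (t - s) * (t - s)) with (g t - g s) in * by (field; lra); lra.
Qed.

Lemma left_slope_is_left_limit z : 0 < z ->
  filterlim (fun x => (g x - g z) / (x - z)) (at_left z) (locally (left_slope z)).
Proof.
  intros Hz. apply filterlim_locally. intros eps.
  destruct (left_slope_lub z Hz) as [Hub Hleast].
  assert (Hx0 : exists x0, 0 < x0 < z /\ left_slope z - eps < slope x0 z).
  { apply NNPP. intros Hn. pose proof (cond_pos eps).
    assert (left_slope z <= left_slope z - eps); [|lra].
    apply Hleast. intros v [x [Hx ->]]. apply Rnot_lt_le. intros Hlt. apply Hn. exists x. auto. }
  destruct Hx0 as [x0 [Hx0 Hsl]].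
  assert (Hd : 0 < z - x0) by lra.
  exists (mkposreal _ Hd). intros y Hy Hyz. change (Rabs (y - z) < z - x0) in Hy.
  apply Rabs_lt_between in Hy. change (Rabs ((g y - g z) / (y - z) - left_slope z) < eps).
  replace ((g y - g z) / (y - z)) with (slope y z) by (unfold slope; field; lra).
  assert (slope x0 z <= slope y z).
  { destruct (Req_dec x0 y) as [->|E]; [lra | apply slope_increasing_left; lra]. }
  pose proof (slope_le_left_slope y z ltac:(lra)). apply Rabs_lt_between. lra.
Qed.

End ConvexLeftDerivative.

Section MonotoneContinuityPoints.
Variable F : R -> R.
Hypothesis Hmono : forall s t, 0 < s -> s <= t -> F s <= F t.

(* Keep the middle half of the outer third with the smaller increment: this halves the
   oscillation of [F] while staying away from both endpoints. *)
Definition trisect (p : R * R) : R * R :=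
  let (l, r) := p in
  let D := (r - l) / 3 in
  if Rle_dec (F (l + D) - F l) (F r - F (r - D)) then (l + D / 4, l + 3 * D / 4)
  else (r - 3 * D / 4, r - D / 4).

Lemma trisect_spec l r : 0 < l -> l < r ->
  l < fst (trisect (l, r)) /\ fst (trisect (l, r)) < snd (trisect (l, r)) /\
  snd (trisect (l, r)) < r /\
  F (snd (trisect (l, r))) - F (fst (trisect (l, r))) <= (F r - F l) / 2.
Proof.
  intros Hl Hlr. unfold trisect. cbv zeta. set (D := (r - l) / 3).
  assert (HD : 0 < D) by (unfold D; lra).
  assert (M1 : F l <= F (l + D)) by (apply Hmono; lra).
  assert (M2 : F (l + D) <= F (r - D)) by (apply Hmono; unfold D in *; lra).
  assert (M3 : F (r - D) <= F r) by (apply Hmono; unfold D in *; lra).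
  destruct Rle_dec as [C|C]; simpl.
  - assert (F l <= F (l + D / 4)) by (apply Hmono; lra).
    assert (F (l + 3 * D / 4) <= F (l + D)) by (apply Hmono; lra).
    repeat split; unfold D in *; lra.
  - assert (F (r - D) <= F (r - 3 * D / 4)) by (apply Hmono; unfold D in *; lra).
    assert (F (r - D / 4) <= F r) by (apply Hmono; unfold D in *; lra).
    repeat split; unfold D in *; lra.
Qed.

Variables a b : R.
Hypothesis Ha : 0 < a.
Hypothesis Hab : a < b.

Fixpoint nest (m : nat) : R * R := match m with O => (a, b) | S m => trisect (nest m) end.

Lemma nest_spec m : a <= fst (nest m) /\ fst (nest m) < snd (nest m) /\ snd (nest m) <= b /\
  F (snd (nest m)) - F (fst (nest m)) <= (F b - F a) / 2 ^ m /\
  fst (nest m) < fst (nest (S m)) /\ snd (nest (S m)) < snd (nest m).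
Proof.
  induction m as [|m IH].
  - destruct (trisect_spec a b Ha Hab) as (A1 & A2 & A3 & A4).
    change (nest 1) with (trisect (a, b)). change (nest 0) with (a, b). cbn [fst snd].
    change (2 ^ 0) with 1.
    replace ((F b - F a) / 1) with (F b - F a) by field. repeat split; lra.
  - destruct IH as (B1 & B2 & B3 & B4 & B5 & B6).
    change (nest (S (S m))) with (trisect (nest (S m))).
    change (nest (S m)) with (trisect (nest m)) in *.
    destruct (nest m) as [l r]. cbn [fst snd] in *.
    destruct (trisect_spec l r ltac:(lra) B2) as (A1 & A2 & A3 & A4).
    destruct (trisect (l, r)) as [l' r']. cbn [fst snd] in *.
    destruct (trisect_spec l' r' ltac:(lra) A2) as (C1 & C2 & C3 & C4).
    assert (0 < 2 ^ m) by (apply pow_lt; lra).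
    replace ((F b - F a) / 2 ^ S m) with ((F b - F a) / 2 ^ m / 2) by (simpl; field; lra).
    repeat split; lra.
Qed.

Lemma nest_left_below_right i m : fst (nest i) < snd (nest m).
Proof.
  assert (Hl : forall i j, (i <= j)%nat -> fst (nest i) <= fst (nest j)).
  { intros i' j Hij. induction Hij as [|j Hij IH]; [lra|].
    pose proof (nest_spec j) as (_ & _ & _ & _ & Hstep & _). lra. }
  assert (Hr : forall i j, (i <= j)%nat -> snd (nest j) <= snd (nest i)).
  { intros i' j Hij. induction Hij as [|j Hij IH]; [lra|].
    pose proof (nest_spec j) as (_ & _ & _ & _ & _ & Hstep). lra. }
  pose proof (Hl i (max i m) ltac:(lia)). pose proof (Hr m (max i m) ltac:(lia)).
  pose proof (nest_spec (max i m)) as (_ & Hlt & _). lra.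
Qed.

Lemma exists_continuity_point : exists c, a < c < b /\ continuous F c.
Proof.
  set (E := fun v => exists m, v = fst (nest m)).
  destruct (completeness E) as [x [Hub Hleast]].
  { exists b. intros v [m ->]. pose proof (nest_left_below_right m 0). simpl in H. lra. }
  { exists a, 0%nat. reflexivity. }
  assert (Hin : forall m, fst (nest m) < x < snd (nest m)).
  { intros m. pose proof (nest_spec m) as (_ & _ & _ & _ & A & B).
    pose proof (Hub (fst (nest (S m))) (ex_intro _ (S m) eq_refl)).
    assert (x <= snd (nest (S m))).
    { apply Hleast. intros v [i ->]. left. apply nest_left_below_right. }
    lra. }
  exists x. split; [pose proof (Hin 0%nat); pose proof (nest_spec 0) as (? & ? & ? & _); lra|].
  apply filterlim_locally. intros eps.
  destruct (pow2_unbounded ((F b - F a) / eps)) as [m Hm].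
  assert (Hp : 0 < 2 ^ m) by (apply pow_lt; lra).
  pose proof (nest_spec m) as (A1 & A2 & A3 & A4 & _). destruct (Hin m) as [I1 I2].
  assert (Hr : 0 < Rmin (x - fst (nest m)) (snd (nest m) - x)) by (apply Rmin_pos; lra).
  exists (mkposreal _ Hr). intros y Hy. change (Rabs (y - x) < Rmin (x - fst (nest m)) (snd (nest m) - x)) in Hy.
  change (Rabs (F y - F x) < eps).
  pose proof (Rmin_l (x - fst (nest m)) (snd (nest m) - x)).
  pose proof (Rmin_r (x - fst (nest m)) (snd (nest m) - x)).
  apply Rabs_lt_between in Hy.
  assert (F (fst (nest m)) <= F y) by (apply Hmono; lra).
  assert (F y <= F (snd (nest m))) by (apply Hmono; lra).
  assert (F (fst (nest m)) <= F x) by (apply Hmono; lra).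
  assert (F x <= F (snd (nest m))) by (apply Hmono; lra).
  assert ((F b - F a) / 2 ^ m < eps).
  { pose proof (cond_pos eps). apply (Rmult_lt_reg_r (2 ^ m / eps)); [apply Rdiv_lt_0_compat; lra|].
    replace ((F b - F a) / 2 ^ m * (2 ^ m / eps)) with ((F b - F a) / eps) by (field; lra).
    replace (eps * (2 ^ m / eps)) with (2 ^ m) by (field; lra). lra. }
  apply Rabs_lt_between. lra.
Qed.

End MonotoneContinuityPoints.

(** * d-monotone generators *)

Lemma continuous_scal_iff (f g : R -> R) (s z : R) : s <> 0 -> 0 < z ->
  (forall y, 0 < y -> f y = s * g y) -> continuous f z <-> continuous g z.
Proof.
  intros Hs Hz Hfg.
  assert (Hnear : locally z (fun y => 0 < y))
    by (apply (locally_interval _ z 0 p_infty); simpl; auto).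
  split; intros Hc.
  - apply (continuous_ext_loc _ (fun y => / s * f y)).
    + apply (filter_imp (fun y => 0 < y)); [|exact Hnear].
      intros y Hy. change (/ s * f y = g y). rewrite Hfg by exact Hy. field. exact Hs.
    + exact (continuous_scal_r (/ s) f z Hc).
  - apply (continuous_ext_loc _ (fun y => s * g y)).
    + exact (filter_imp _ _ (fun y Hy => eq_sym (Hfg y Hy)) Hnear).
    + exact (continuous_scal_r s g z Hc).
Qed.

Definition tends_to_infinity (f : R -> R) : Prop :=
  forall M, exists Y, forall y, Y <= y -> M <= f y.

Lemma tends_to_infinity_of_deriv (F f : R -> R) (c Y : R) : 0 < c -> 0 < Y ->
  (forall x, 0 < x -> is_derive F x (f x)) -> (forall y, Y <= y -> c <= f y) ->
  tends_to_infinity F.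
Proof.
  intros Hc HY Hd Hf M. exists (Y + Rabs (M - F Y) / c). intros y Hy.
  assert (Hq : 0 <= Rabs (M - F Y) / c) by (apply Rdiv_le_0_compat; [apply Rabs_pos | lra]).
  assert (Hcq : c * (Rabs (M - F Y) / c) = Rabs (M - F Y)) by (field; lra).
  pose proof (Rle_abs (M - F Y)).
  destruct (Req_dec y Y) as [->|Hne]; [nra|].
  destruct (MVT_cor2 F f Y y ltac:(lra)) as [xi [E Hxi]].
  { intros x Hx. apply is_derive_Reals, Hd. lra. }
  pose proof (Hf xi ltac:(lra)). nra.
Qed.

Definition signed_deriv (f : R -> R) (j : nat) (x : R) : R := (-1) ^ j * Derive_n f j x.

Lemma signed_deriv_0 (f : R -> R) x : signed_deriv f 0 x = f x.
Proof. unfold signed_deriv. simpl. ring. Qed.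

Lemma Derive_n_signed_deriv (f : R -> R) j x : Derive_n f j x = (-1) ^ j * signed_deriv f j x.
Proof.
  unfold signed_deriv. rewrite <- Rmult_assoc, <- Rpow_mult_distr.
  replace (-1 * -1) with 1 by ring. rewrite pow1. ring.
Qed.

(* Iterating [(x/2) f_(j+1)(x) <= f_j(x/2)] down to [psi <= 1], where
   [f_j = signed_deriv psi j]. *)
Fixpoint deriv_bound (j : nat) (x : R) : R :=
  match j with O => 1 | S j => 2 / x * deriv_bound j (x / 2) end.

Section DMonotoneGenerator.
Variables (d : nat) (psi : R -> R).
Hypothesis A : ar_generator d psi.

Lemma ar_generator_is_generator : is_generator psi.
Proof. destruct A as [[G _] _]. exact G. Qed.

Lemma ar_generator_at_1 : psi 1 = / 2.
Proof. destruct A as [_ N]. exact N. Qed.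

Lemma signed_deriv_is_derive j x : (j < d - 2)%nat -> 0 < x ->
  is_derive (signed_deriv psi j) x (- signed_deriv psi (S j) x).
Proof.
  intros Hj Hx. destruct A as [[_ [Hex _]] _].
  pose proof (is_derive_scal _ _ ((-1) ^ j) _ (Derive_correct _ _ (Hex j x Hj Hx))) as H.
  unfold signed_deriv. simpl Derive_n.
  replace (- ((-1) ^ S j * Derive (Derive_n psi j) x)) with ((-1) ^ j * Derive (Derive_n psi j) x)
    by (simpl; ring). exact H.
Qed.

Lemma top_signed_deriv_props :
  (forall x, 0 < x -> 0 <= signed_deriv psi (d - 2) x) /\
  (forall x y, 0 < x -> x <= y -> signed_deriv psi (d - 2) y <= signed_deriv psi (d - 2) x) /\
  (forall x y t, 0 < x -> 0 < y -> 0 <= t <= 1 ->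
     signed_deriv psi (d - 2) (t * x + (1 - t) * y)
       <= t * signed_deriv psi (d - 2) x + (1 - t) * signed_deriv psi (d - 2) y).
Proof. destruct A as [[_ [_ H]] _]. exact H. Qed.

Lemma signed_deriv_not_tends_to_infinity j sg : (j <= d - 2)%nat -> Rabs sg <= 1 ->
  ~ tends_to_infinity (fun x => sg * signed_deriv psi j x).
Proof.
  revert sg. induction j as [|j IH]; intros sg Hj Hsg Hinf.
  - destruct (Hinf 2) as [Y HY]. specialize (HY (Rmax Y 1) (Rmax_l Y 1)).
    rewrite signed_deriv_0 in HY.
    pose proof (generator_range psi ar_generator_is_generator (Rmax Y 1)
                  ltac:(pose proof (Rmax_r Y 1); lra)).
    apply Rabs_le_between in Hsg. nra.
  - apply (IH (- sg) ltac:(lia) ltac:(rewrite Rabs_Ropp; exact Hsg)).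
    destruct (Hinf 1) as [Y HY].
    apply (tends_to_infinity_of_deriv _ (fun x => sg * signed_deriv psi (S j) x) 1 (Rmax Y 1));
      [lra | pose proof (Rmax_r Y 1); lra | | intros y Hy; apply HY; pose proof (Rmax_l Y 1); lra].
    intros x Hx. replace (sg * signed_deriv psi (S j) x) with (- sg * - signed_deriv psi (S j) x) by ring.
    apply is_derive_scal, signed_deriv_is_derive; [lia | exact Hx].
Qed.

(* A negative value of the nonincreasing f_j would make f_(j-1) grow at least linearly,
   and integrating further down would make psi or -psi unbounded. *)
Lemma signed_deriv_nonneg_antitone_step j : (j < d - 2)%nat ->
  (forall x, 0 < x -> 0 <= signed_deriv psi (S j) x) ->
  (forall x y, 0 < x -> x <= y -> signed_deriv psi (S j) y <= signed_deriv psi (S j) x) ->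
  (forall x, 0 < x -> 0 <= signed_deriv psi j x) /\
  (forall x y, 0 < x -> x <= y -> signed_deriv psi j y <= signed_deriv psi j x).
Proof.
  intros Hj Hnn Hanti.
  assert (Hslope : slope_sandwich (signed_deriv psi j) (fun x => - signed_deriv psi (S j) x)).
  { apply slope_sandwich_of_deriv.
    - intros x Hx. apply signed_deriv_is_derive; assumption.
    - intros x y Hx Hxy. pose proof (Hanti x y Hx Hxy). lra. }
  assert (Hmono : forall x y, 0 < x -> x <= y -> signed_deriv psi j y <= signed_deriv psi j x).
  { intros x y Hx Hxy. destruct (Req_dec x y) as [->|Hne]; [lra|].
    destruct (Hslope x y Hx ltac:(lra)) as [_ B]. pose proof (Hnn y ltac:(lra)). nra. }
  split; [|exact Hmono].
  intros x0 Hx0. apply Rnot_lt_le. intros Hneg. destruct j as [|i].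
  - rewrite signed_deriv_0 in Hneg.
    pose proof (generator_range psi ar_generator_is_generator x0 ltac:(lra)). lra.
  - apply (signed_deriv_not_tends_to_infinity i 1 ltac:(lia) ltac:(rewrite Rabs_R1; lra)).
    apply (tends_to_infinity_of_deriv _ (fun x => - signed_deriv psi (S i) x)
             (- signed_deriv psi (S i) x0) x0); [lra | lra | |].
    + intros x Hx. replace (- signed_deriv psi (S i) x) with (1 * - signed_deriv psi (S i) x) by ring.
      apply is_derive_scal, signed_deriv_is_derive; [lia | exact Hx].
    + intros y Hy. pose proof (Hmono x0 y Hx0 Hy). lra.
Qed.

Lemma signed_deriv_nonneg_antitone j : (j <= d - 2)%nat ->
  (forall x, 0 < x -> 0 <= signed_deriv psi j x) /\
  (forall x y, 0 < x -> x <= y -> signed_deriv psi j y <= signed_deriv psi j x).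
Proof.
  intros Hj. replace j with (d - 2 - (d - 2 - j))%nat by lia.
  assert (Hj' : (d - 2 - j <= d - 2)%nat) by lia. revert Hj'.
  generalize (d - 2 - j)%nat. intros i. induction i as [|i IH]; intros Hi.
  - rewrite Nat.sub_0_r. destruct top_signed_deriv_props as (H1 & H2 & _). auto.
  - destruct IH as [Hnn Hanti]; [lia|].
    replace (d - 2 - i)%nat with (S (d - 2 - S i)) in Hnn, Hanti by lia.
    apply signed_deriv_nonneg_antitone_step; [lia | exact Hnn | exact Hanti].
Qed.

Lemma signed_deriv_slope_sandwich j : (j < d - 2)%nat ->
  slope_sandwich (signed_deriv psi j) (fun x => - signed_deriv psi (S j) x).
Proof.
  intros Hj. apply slope_sandwich_of_deriv.
  - intros x Hx. apply signed_deriv_is_derive; assumption.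
  - intros x y Hx Hxy. pose proof (proj2 (signed_deriv_nonneg_antitone (S j) Hj) x y Hx Hxy). lra.
Qed.

Lemma signed_deriv_decay j z w : (j < d - 2)%nat -> 0 < z -> z < w ->
  (w - z) * signed_deriv psi (S j) w <= signed_deriv psi j z.
Proof.
  intros Hj Hz Hw. destruct (signed_deriv_slope_sandwich j Hj z w Hz Hw) as [_ B].
  pose proof (proj1 (signed_deriv_nonneg_antitone j ltac:(lia)) w ltac:(lra)). lra.
Qed.

Lemma signed_deriv_le_bound j x : (j <= d - 2)%nat -> 0 < x -> signed_deriv psi j x <= deriv_bound j x.
Proof.
  revert x. induction j as [|j IH]; intros x Hj Hx.
  - simpl. rewrite signed_deriv_0. apply (generator_range psi ar_generator_is_generator). lra.
  - pose proof (signed_deriv_decay j (x / 2) x ltac:(lia) ltac:(lra) ltac:(lra)) as Hdecay.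
    specialize (IH (x / 2) ltac:(lia) ltac:(lra)). simpl deriv_bound.
    replace (signed_deriv psi (S j) x) with (2 / x * ((x - x / 2) * signed_deriv psi (S j) x))
      by (field; lra).
    apply Rmult_le_compat_l; [apply Rlt_le, Rdiv_lt_0_compat|]; lra.
Qed.

Definition top_left_slope : R -> R :=
  left_slope (signed_deriv psi (d - 2)) (proj2 (proj2 top_signed_deriv_props)).

Lemma top_slope_sandwich : slope_sandwich (signed_deriv psi (d - 2)) top_left_slope.
Proof. apply slope_sandwich_left_slope. Qed.

Lemma left_deriv_top z : 0 < z ->
  left_deriv (Derive_n psi (d - 2)) z = (-1) ^ (d - 2) * top_left_slope z.
Proof.
  intros Hz. unfold left_deriv. apply lim_filtermap; [apply at_left_proper_filter|].
  eapply filterlim_ext.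
  2: exact (filterlim_comp _ _ _ _ _ _ _ _
              (left_slope_is_left_limit _ (proj2 (proj2 top_signed_deriv_props)) z Hz)
              (filterlim_scal_r ((-1) ^ (d - 2)) (top_left_slope z))).
  intros x. change (scal ((-1) ^ (d - 2)) ((signed_deriv psi (d - 2) x - signed_deriv psi (d - 2) z) / (x - z))
                    = (Derive_n psi (d - 2) x - Derive_n psi (d - 2) z) / (x - z)).
  rewrite !Derive_n_signed_deriv. unfold scal. simpl. unfold mult. simpl. unfold Rdiv. ring.
Qed.

Lemma continuous_left_deriv_top z : 0 < z ->
  continuous (left_deriv (Derive_n psi (d - 2))) z <-> continuous top_left_slope z.
Proof.
  intros Hz. apply (continuous_scal_iff _ _ ((-1) ^ (d - 2))).
  - apply pow_nonzero. lra.
  - exact Hz.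
  - exact left_deriv_top.
Qed.

End DMonotoneGenerator.

Lemma signed_deriv_uniformly_small d j z eps : (1 <= j <= d - 2)%nat -> 0 < z -> 0 < eps ->
  exists w, z < w /\ forall f, ar_generator d f -> 0 <= signed_deriv f j w <= eps.
Proof.
  intros Hj Hz Heps. destruct j as [|i]; [lia|].
  set (B := Rabs (deriv_bound i z) + 1).
  assert (HB : 0 < B) by (unfold B; pose proof (Rabs_pos (deriv_bound i z)); lra).
  assert (HBe : 0 < B / eps) by (apply Rdiv_lt_0_compat; lra).
  exists (z + B / eps). split; [lra|]. intros f Af.
  split; [apply (signed_deriv_nonneg_antitone d f Af (S i)); [lia | lra]|].
  pose proof (signed_deriv_decay d f Af i z (z + B / eps) ltac:(lia) Hz ltac:(lra)) as Hdecay.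
  pose proof (signed_deriv_le_bound d f Af i z ltac:(lia) Hz).
  pose proof (Rle_abs (deriv_bound i z)).
  replace (z + B / eps - z) with (B / eps) in Hdecay by ring.
  apply (Rmult_le_reg_l (B / eps)); [exact HBe|].
  replace (B / eps * eps) with B by (field; lra). unfold B in *. lra.
Qed.

(** * Convergence of derivatives *)

Lemma cont_conv_scal (gs hs : nat -> R -> R) (g h : R -> R) (c z : R) :
  (forall n x, 0 < x -> hs n x = c * gs n x) -> (forall x, 0 < x -> h x = c * g x) -> 0 < z ->
  cont_conv_at gs g z -> cont_conv_at hs h z.
Proof.
  intros Hhs Hh Hz C zs Hzs Hl. rewrite Hh by exact Hz.
  apply is_lim_seq_ext with (fun n => c * gs n (zs n)); [intros n; rewrite Hhs; auto|].
  exact (is_lim_seq_scal_l _ c _ (C zs Hzs Hl)).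
Qed.

Lemma converges_at_of_increments (gs : nat -> R -> R) (g : R -> R) z :
  (forall eps, 0 < eps -> exists w, (forall n, Rabs (gs n w - g w) <= eps) /\
     is_lim_seq (fun n => gs n w - gs n z) (g w - g z)) ->
  converges_at gs g z.
Proof.
  intros H. apply is_lim_seq_epsilon. intros eps Heps.
  destruct (H (eps / 2) ltac:(lra)) as [w [Hw Hinc]].
  apply (filter_imp (fun n => Rabs ((gs n w - gs n z) - (g w - g z)) < eps / 2)).
  - intros n Hn. specialize (Hw n). apply Rabs_lt_between in Hn. apply Rabs_le_between in Hw.
    apply Rabs_lt_between. lra.
  - apply is_lim_seq_near; [exact Hinc | lra].
Qed.

Lemma pow_minus_one_sqr m : (-1) ^ m * (-1) ^ m = 1.
Proof. rewrite <- Rpow_mult_distr. replace (-1 * -1) with 1 by ring. apply pow1. Qed.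

Section GeneratorSequence.
Variables (d : nat) (psi : R -> R) (psis : nat -> R -> R).
Hypothesis A : ar_generator d psi.
Hypothesis As : forall n, ar_generator d (psis n).

Let G := ar_generator_is_generator d psi A.
Let Gs n := ar_generator_is_generator d (psis n) (As n).

Lemma generator_converges_iff_signed z :
  converges_at (fun n => signed_deriv (psis n) 0) (signed_deriv psi 0) z <-> converges_at psis psi z.
Proof.
  unfold converges_at. rewrite signed_deriv_0.
  split; apply is_lim_seq_ext; intros n; rewrite signed_deriv_0; reflexivity.
Qed.

Lemma signed_deriv_converges_of_increments j : (j <= d - 2)%nat ->
  (forall a b, 0 < a -> a < b ->
     is_lim_seq (fun n => signed_deriv (psis n) j b - signed_deriv (psis n) j a)
                (signed_deriv psi j b - signed_deriv psi j a)) ->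
  forall z, 0 < z -> converges_at (fun n => signed_deriv (psis n) j) (signed_deriv psi j) z.
Proof.
  intros Hj Hinc z Hz. apply converges_at_of_increments. intros eps Heps.
  destruct j as [|i].
  - exists 1. split.
    + intros n. rewrite !signed_deriv_0, (ar_generator_at_1 d psi A), (ar_generator_at_1 d _ (As n)).
      rewrite Rminus_eq_0, Rabs_R0. lra.
    + destruct (Rtotal_order z 1) as [Hlt|[->|Hgt]]; [apply Hinc; lra| |].
      * apply is_lim_seq_ext with (fun _ => 0); [intros n; ring|].
        replace (_ - _) with 0 by ring. apply is_lim_seq_const.
      * apply is_lim_seq_ext with (fun n => - (signed_deriv (psis n) 0 z - signed_deriv (psis n) 0 1));
          [intros n; ring|].
        replace (_ - _) with (- (signed_deriv psi 0 z - signed_deriv psi 0 1)) by ring.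
        exact (proj1 (is_lim_seq_opp _ _) (Hinc 1 z ltac:(lra) Hgt)).
  - destruct (signed_deriv_uniformly_small d (S i) z (eps / 2) ltac:(lia) Hz ltac:(lra))
      as [w [Hw Hsmall]].
    exists w. split; [|apply Hinc; lra].
    intros n. pose proof (Hsmall _ A). pose proof (Hsmall _ (As n)). apply Rabs_le_between. lra.
Qed.

Lemma signed_deriv_converges_down m : (m <= d - 2)%nat ->
  (forall z, 0 < z -> converges_at (fun n => signed_deriv (psis n) m) (signed_deriv psi m) z) ->
  forall z, 0 < z -> converges_at psis psi z.
Proof.
  induction m as [|m IH]; intros Hm Hconv z Hz.
  - apply generator_converges_iff_signed, Hconv, Hz.
  - apply IH; [lia | | exact Hz]. apply signed_deriv_converges_of_increments; [lia|].
    intros a b Ha Hab.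
    apply (increment_lim (fun n => signed_deriv (psis n) m) (fun n x => - signed_deriv (psis n) (S m) x)
             (signed_deriv psi m) (fun x => - signed_deriv psi (S m) x) (fun x => 0 < x) a b); auto.
    + intros n. apply (signed_deriv_slope_sandwich d); [exact (As n) | lia].
    + apply (signed_deriv_slope_sandwich d); [exact A | lia].
    + intros a' b' Ha' Hab'. exists ((a' + b') / 2). split; lra.
    + intros c Hc. exact (proj1 (is_lim_seq_opp _ _) (Hconv c Hc)).
Qed.

Lemma signed_deriv_cont_conv :
  (forall z, 0 < z -> converges_at psis psi z) ->
  forall j z, (j <= d - 2)%nat -> 0 < z ->
  cont_conv_at (fun n => signed_deriv (psis n) j) (signed_deriv psi j) z.
Proof.
  intros Hlim j. induction j as [|j IH]; intros z Hj Hz.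
  - apply (cont_conv_antitone _ _ (fun x => 0 < x)); [exact Hz | | | |].
    + intros n x y Hx Hxy. apply (signed_deriv_nonneg_antitone d (psis n) (As n) 0); [lia | lra | lra].
    + intros a b Ha Hab. exists ((a + b) / 2). split; lra.
    + intros c Hc. apply generator_converges_iff_signed, Hlim, Hc.
    + apply (continuous_ext psi); [intros x; rewrite signed_deriv_0; reflexivity|].
      apply generator_continuous; assumption.
  - apply (cont_conv_scal (fun n x => - signed_deriv (psis n) (S j) x) _
             (fun x => - signed_deriv psi (S j) x) _ (-1)); [intros; ring | intros; ring | exact Hz|].
    apply (cont_conv_slope (fun n => signed_deriv (psis n) j) _ (signed_deriv psi j));
      [| |exact Hz|].
    + intros n. apply (signed_deriv_slope_sandwich d); [exact (As n) | lia].
    + intros y Hy. apply IH; [lia | exact Hy].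
    + apply (signed_deriv_is_derive d); [exact A | lia | exact Hz].
Qed.

Lemma Derive_n_cont_conv m z : (m <= d - 2)%nat -> 0 < z ->
  (forall z, 0 < z -> converges_at psis psi z) ->
  cont_conv_at (fun n => Derive_n (psis n) m) (Derive_n psi m) z.
Proof.
  intros Hm Hz Hlim.
  apply (cont_conv_scal (fun n => signed_deriv (psis n) m) _ (signed_deriv psi m) _ ((-1) ^ m));
    [intros; apply Derive_n_signed_deriv | intros; apply Derive_n_signed_deriv | exact Hz|].
  apply signed_deriv_cont_conv; assumption.
Qed.

Lemma left_deriv_cont_conv z : 0 < z ->
  continuous (left_deriv (Derive_n psi (d - 2))) z ->
  (forall z, 0 < z -> converges_at psis psi z) ->
  cont_conv_at (fun n => left_deriv (Derive_n (psis n) (d - 2))) (left_deriv (Derive_n psi (d - 2))) z.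
Proof.
  intros Hz Hc Hlim.
  apply (cont_conv_scal (fun n => top_left_slope d (psis n) (As n)) _ (top_left_slope d psi A) _
           ((-1) ^ (d - 2))); [intros n x Hx; apply left_deriv_top; exact Hx
                              | intros x Hx; apply left_deriv_top; exact Hx | exact Hz|].
  apply (cont_conv_slope (fun n => signed_deriv (psis n) (d - 2)) _ (signed_deriv psi (d - 2)));
    [| |exact Hz|].
  - intros n. apply top_slope_sandwich.
  - intros y Hy. apply signed_deriv_cont_conv; [exact Hlim | lia | exact Hy].
  - apply slope_sandwich_is_derive; [apply top_slope_sandwich | exact Hz|].
    apply (continuous_left_deriv_top d psi A z Hz). exact Hc.
Qed.

Lemma generator_lim_of_Derive_n_lim m : (m <= d - 2)%nat ->
  (forall z, 0 < z -> is_lim_seq (fun n => Derive_n (psis n) m z) (Derive_n psi m z)) ->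
  forall z, 0 < z -> converges_at psis psi z.
Proof.
  intros Hm Hconv. apply (signed_deriv_converges_down m Hm).
  intros z Hz. exact (is_lim_seq_scal_l _ ((-1) ^ m) _ (Hconv z Hz)).
Qed.

Lemma generator_lim_of_left_deriv_lim :
  (forall z, 0 < z /\ continuous (left_deriv (Derive_n psi (d - 2))) z ->
     is_lim_seq (fun n => left_deriv (Derive_n (psis n) (d - 2)) z)
                (left_deriv (Derive_n psi (d - 2)) z)) ->
  forall z, 0 < z -> converges_at psis psi z.
Proof.
  intros Hconv. apply (signed_deriv_converges_down (d - 2) (le_n _)).
  apply signed_deriv_converges_of_increments; [lia|]. intros a b Ha Hab.
  apply (increment_lim (fun n => signed_deriv (psis n) (d - 2)) (fun n => top_left_slope d (psis n) (As n))
           (signed_deriv psi (d - 2)) (top_left_slope d psi A)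
           (fun c => 0 < c /\ continuous (left_deriv (Derive_n psi (d - 2))) c) a b); auto.
  - intros n. apply top_slope_sandwich.
  - apply top_slope_sandwich.
  - intros a' b' Ha' Hab'.
    destruct (exists_continuity_point (top_left_slope d psi A)
                (slope_sandwich_mono _ _ (top_slope_sandwich d psi A)) a' b' Ha' Hab')
      as [c [Hc Hcont]].
    exists c. split; [exact Hc|]. split; [lra|].
    apply (continuous_left_deriv_top d psi A c ltac:(lra)). exact Hcont.
  - intros c [Hc Hcont].
    apply is_lim_seq_ext with (fun n => (-1) ^ (d - 2) * left_deriv (Derive_n (psis n) (d - 2)) c).
    { intros n. rewrite (left_deriv_top d (psis n) (As n) c Hc), <- Rmult_assoc, pow_minus_one_sqr.
      ring. }
    unfold converges_at. replace (top_left_slope d psi A c)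
      with ((-1) ^ (d - 2) * left_deriv (Derive_n psi (d - 2)) c)
      by (rewrite (left_deriv_top d psi A c Hc), <- Rmult_assoc, pow_minus_one_sqr; ring).
    exact (is_lim_seq_scal_l _ _ _ (Hconv c (conj Hc Hcont))).
Qed.

Lemma generator_lim_of_copula_lim : (2 <= d)%nat ->
  (forall u, in_unit_cube d u -> is_lim_seq (fun n => arch_copula d (psis n) u) (arch_copula d psi u)) ->
  forall z, 0 < z -> converges_at psis psi z.
Proof.
  intros Hd Hconv z Hz. apply cont_conv_converges_at; [exact Hz|].
  apply (generator_cont_conv_of_biv psi psis G Gs);
    [| exact (ar_generator_at_1 d psi A) | intros n; exact (ar_generator_at_1 d _ (As n)) | exact Hz].
  intros x y Hx Hy. rewrite <- (arch_copula_pair psi G d x y Hd Hx Hy).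
  apply is_lim_seq_ext with (fun n => arch_copula d (psis n) (pair_point x y));
    [intros n; apply arch_copula_pair; auto|].
  apply Hconv, pair_point_in_cube; assumption.
Qed.

End GeneratorSequence.

Theorem lemma4p4 (d : nat) (psi : R -> R) (psis : nat -> R -> R) :
  (3 <= d)%nat ->
  ar_generator d psi ->
  (forall n, ar_generator d (psis n)) ->
  let Cn := fun n => arch_copula d (psis n) in
  let C := arch_copula d psi in
  let LD := left_deriv (Derive_n psi (d - 2)) in
  let LDn := fun n => left_deriv (Derive_n (psis n) (d - 2)) in
  let ContLD := fun z => 0 < z /\ continuous LD z in
  (* forward direction *)
  ((forall u, in_unit_cube d u -> is_lim_seq (fun n => Cn n u) (C u)) ->
     (forall m, (m <= d - 2)%nat ->
        (forall z, 0 < z ->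
           is_lim_seq (fun n => Derive_n (psis n) m z) (Derive_n psi m z)) /\
        (forall z, 0 < z ->
           cont_conv_at (fun n => Derive_n (psis n) m) (Derive_n psi m) z)) /\
     (forall z, ContLD z -> is_lim_seq (fun n => LDn n z) (LD z)) /\
     (forall z, ContLD z -> cont_conv_at LDn LD z)) /\
  (* converse via derivatives of order m in {1,...,d-2} *)
  (forall m, (1 <= m <= d - 2)%nat ->
     (forall z, 0 < z ->
        is_lim_seq (fun n => Derive_n (psis n) m z) (Derive_n psi m z)) ->
     forall u, in_unit_cube d u -> is_lim_seq (fun n => Cn n u) (C u)) /\
  (* converse via left derivatives of order d-2 *)
  ((forall z, ContLD z -> is_lim_seq (fun n => LDn n z) (LD z)) ->
     forall u, in_unit_cube d u -> is_lim_seq (fun n => Cn n u) (C u)).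
Proof.
  intros Hd A As. cbv zeta.
  pose proof (fun Hlim => arch_copula_lim psi psis (ar_generator_is_generator d psi A)
                (fun n => ar_generator_is_generator d (psis n) (As n)) Hlim d) as Hcopula.
  split; [|split].
  - intros Hconv.
    pose proof (generator_lim_of_copula_lim d psi psis A As ltac:(lia) Hconv) as Hlim.
    split; [|split].
    + intros m Hm. split; intros z Hz;
        [apply (cont_conv_converges_at (fun n => Derive_n (psis n) m)); [exact Hz|]|];
        apply (Derive_n_cont_conv d psi psis A As); assumption.
    + intros z [Hz Hc].
      apply (cont_conv_converges_at (fun n => left_deriv (Derive_n (psis n) (d - 2)))); [exact Hz|].
      apply (left_deriv_cont_conv d psi psis A As); assumption.
    + intros z [Hz Hc]. apply (left_deriv_cont_conv d psi psis A As); assumption.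
  - intros m Hm Hconv. apply Hcopula.
    apply (generator_lim_of_Derive_n_lim d psi psis A As m); [lia | exact Hconv].
  - intros Hconv. apply Hcopula. apply (generator_lim_of_left_deriv_lim d psi psis A As Hconv).
Qed.
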